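(* Let $\gamma=(x,y)\in\mathcal{C}$ with $|\gamma'|\equiv1$, let $u\in\mathcal{P}$ have finitely many interfaces, let $s\in S_u$, and let $J\Subset\{y>0\}$ be an open interval with $\overline J\cap S_u=\{s\}$. Then for every sufficiently small $\varepsilon>0$ there is $u_\varepsilon\in W^{1,2}(J)$ with $\{u_\varepsilon\neq u\}\Subset J$, $\|u_\varepsilon\|_\infty\le C_0$, $\int_{M_\gamma(J)}u_\varepsilon\,d\mu=\int_{M_\gamma(J)}u\,d\mu$, such that $u_\varepsilon\to u$ in $L^1(J)$ as $\varepsilon\to0$ and $$\limsup_{\varepsilon\to0}\int_{M_\gamma(J)}\Big(\varepsilon|\nabla_{M_\gamma}u_\varepsilon|^2+\frac1\varepsilon W(u_\varepsilon)\Big)d\mu\le 2\pi\sigma\,y(s).$$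
   Context: Let $I\subset\mathbb{R}$ be a bounded open interval. For a Lipschitz curve $\gamma=(x,y)\colon I\to\mathbb{R}^2$ with $y\ge0$ (extended continuously to $\overline I$), $M_\gamma$ is the surface obtained by rotating $\gamma$ about the $x$-axis, area measure $d\mu=|\gamma'|\,y\,dt\,d\theta$; $M_\gamma(J)$ is the part generated by $\gamma(J)$, $\mathcal{A}_\gamma=2\pi\int_I|\gamma'|y\,dt$; for $\theta$-independent $f$, $\int_{M_\gamma(J)}f\,d\mu=2\pi\int_J f|\gamma'|y\,dt$; for a function $u$ of $t$ only, $|\nabla_{M_\gamma}u|=|u'|/|\gamma'|$. Where $\gamma$ is twice weakly differentiable, $\gamma'\ne0$, $y>0$: $\kappa_1=(x''y'-y''x')/|\gamma'|^3$, $\kappa_2=x'/(y|\gamma'|)$, $|B|^2=\kappa_1^2+\kappa_2^2$. $\{y>0\}=\{t\in I:y(t)>0\}$. Fix $A_0>0$, $m\in\mathbb{R}$, $C_0>1$. $W\colon\mathbb{R}\to[0,\infty)$ is continuous, vanishes exactly at $\pm1$, and is $C^2$ near $\pm1$; $\sigma=2\int_{-1}^1\sqrt{W(s)}\,ds$. $\mathcal{C}$ is the set of $\gamma=(x,y)\in C^{0,1}(I;\mathbb{R}^2)$ with $\gamma\in W^{2,1}_{loc}(\{y>0\};\mathbb{R}^2)$, $|\gamma'|$ a.e. equal to a positive constant, $y\ge0$, $y(\partial I)=\{0\}$, $\{y=0\}$ finite, $\int_{M_\gamma(\{y>0\})}|B|^2d\mu<\infty$, $\mathcal{A}_\gamma=A_0$.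 For $\gamma\in\mathcal{C}$, $\mathcal{P}$ is the set of $u\colon I\to\{\pm1\}$ for which there is a set $S_u\subset\{y>0\}$ (the jump set, taken minimal; its points are called interfaces) with $S_u\cap J$ finite for every $J\Subset\{y>0\}$, $u$ constant on each connected component of $\{y>0\}\setminus S_u$, $\int_{M_\gamma}u\,d\mu=mA_0$, and $2\pi\sum_{s\in S_u}y(s)<\infty$. *)

(* Lebesgue integrals on bounded intervals are
   expressed elementarily through the Henstock--Kurzweil (gauge) integral:
   f is Lebesgue integrable on [a,b] iff f and |f| are HK-integrable, and then
   the two integrals coincide. *)
From Stdlib Require Import Reals Lra List.
Open Scope R_scope.

(* Tagged partitions of [a,b]: lists of (left, tag, right). *)
Fixpoint is_partition (a b : R) (P : list (R * R * R)) : Prop :=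
  match P with
  | nil => a = b
  | (l, t, r) :: P' => l = a /\ l < r /\ l <= t /\ t <= r /\ is_partition r b P'
  end.

Fixpoint fine (g : R -> R) (P : list (R * R * R)) : Prop :=
  match P with
  | nil => True
  | (l, t, r) :: P' => t - g t < l /\ r < t + g t /\ fine g P'
  end.

Fixpoint rsum (f : R -> R) (P : list (R * R * R)) : R :=
  match P with
  | nil => 0
  | (l, t, r) :: P' => f t * (r - l) + rsum f P'
  end.

Definition HK_integral (f : R -> R) (a b I : R) : Prop :=
  a <= b /\
  forall eps, 0 < eps -> exists g : R -> R, (forall t, 0 < g t) /\
    forall P, is_partition a b P -> fine g P -> Rabs (rsum f P - I) < eps.

Definition Lint (f : R -> R) (a b I : R) : Prop :=
  HK_integral f a b I /\ exists J, HK_integral (fun t => Rabs (f t)) a b J.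

Definition null_set (N : R -> Prop) : Prop :=
  forall eps, 0 < eps -> exists l r : nat -> R,
    (forall n, l n <= r n) /\
    (forall t, N t -> exists n, l n < t < r n) /\
    (forall n, sum_f_R0 (fun k => r k - l k) n < eps).

Definition ae_on (a b : R) (P : R -> Prop) : Prop :=
  exists N, null_set N /\ forall t, a < t < b -> ~ N t -> P t.

(* Sobolev space W^{1,2}((c,d)): v (continuous representative) is absolutely
   continuous with weak derivative g, and v, g are in L^2((c,d)). *)
Definition W12 (c d : R) (v g : R -> R) : Prop :=
  (exists I, Lint v c d I) /\ (exists I, Lint (fun t => v t ^ 2) c d I) /\
  (exists I, Lint g c d I) /\ (exists I, Lint (fun t => g t ^ 2) c d I) /\
  forall t1 t2, c < t1 -> t1 <= t2 -> t2 < d -> HK_integral g t1 t2 (v t2 - v t1).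

Definition W_ok (W : R -> R) : Prop :=
  continuity W /\ (forall r, 0 <= W r) /\
  (forall r, W r = 0 <-> (r = 1 \/ r = -1)) /\
  (forall z, (z = 1 \/ z = -1) ->
     exists del, 0 < del /\ exists W1 W2 : R -> R,
       forall r, Rabs (r - z) < del ->
         derivable_pt_lim W r (W1 r) /\ derivable_pt_lim W1 r (W2 r) /\
         continuity_pt W2 r).

(* The class C, for the curve gamma = (x,y) on I = (a0,b0), with
   |gamma'| a.e. equal to the positive constant sp. *)
Definition in_C (A0 a0 b0 : R) (x y : R -> R) (sp : R) : Prop :=
  (exists L, forall t1 t2, a0 <= t1 <= b0 -> a0 <= t2 <= b0 ->
      sqrt ((x t1 - x t2) ^ 2 + (y t1 - y t2) ^ 2) <= L * Rabs (t1 - t2)) /\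
  0 < sp /\
  ae_on a0 b0 (fun t => exists dx dy, derivable_pt_lim x t dx /\
      derivable_pt_lim y t dy /\ sqrt (dx ^ 2 + dy ^ 2) = sp) /\
  (forall t, a0 <= t <= b0 -> 0 <= y t) /\ y a0 = 0 /\ y b0 = 0 /\
  (exists Z : list R, forall t, a0 < t < b0 -> y t = 0 -> In t Z) /\
  (* W^{2,1}_loc({y>0}) with representatives (x1,y1) of gamma' and (x2,y2) of
     gamma'', and finite Willmore-type energy int |B|^2 dmu *)
  (exists x1 y1 x2 y2 : R -> R,
     (forall c d, a0 < c -> c <= d -> d < b0 -> (forall t, c <= t <= d -> 0 < y t) ->
        (exists I, Lint x2 c d I) /\ (exists I, Lint y2 c d I) /\
        forall t, c <= t <= d ->
          HK_integral x1 c t (x t - x c) /\ HK_integral y1 c t (y t - y c) /\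
          HK_integral x2 c t (x1 t - x1 c) /\ HK_integral y2 c t (y1 t - y1 c)) /\
     (exists K, forall c d, a0 < c -> c <= d -> d < b0 ->
        (forall t, c <= t <= d -> 0 < y t) ->
        exists I, HK_integral (fun t =>
            let s := sqrt (x1 t ^ 2 + y1 t ^ 2) in
            let k1 := (x2 t * y1 t - y2 t * x1 t) / s ^ 3 in
            let k2 := x1 t / (y t * s) in
            2 * PI * (k1 ^ 2 + k2 ^ 2) * s * y t) c d I /\ I <= K)) /\
  (exists I, Lint y a0 b0 I /\ 2 * PI * sp * I = A0).

Definition jump_set (a0 b0 : R) (y u : R -> R) (s : R) : Prop :=
  a0 < s < b0 /\ 0 < y s /\
  forall del, 0 < del -> exists t1 t2, a0 < t1 < b0 /\ a0 < t2 < b0 /\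
    Rabs (t1 - s) < del /\ Rabs (t2 - s) < del /\ u t1 <> u t2.

Fixpoint sum_list (f : R -> R) (l : list R) : R :=
  match l with nil => 0 | t :: l' => f t + sum_list f l' end.

Definition in_P (A0 m a0 b0 : R) (y : R -> R) (sp : R) (u : R -> R) : Prop :=
  (forall t, a0 < t < b0 -> u t = 1 \/ u t = -1) /\
  (forall c d, a0 < c -> d < b0 -> (forall t, c <= t <= d -> 0 < y t) ->
     exists L : list R, forall t, c <= t <= d -> jump_set a0 b0 y u t -> In t L) /\
  (forall t1 t2, a0 < t1 -> t1 <= t2 -> t2 < b0 ->
     (forall t, t1 <= t <= t2 -> 0 < y t /\ ~ jump_set a0 b0 y u t) -> u t1 = u t2) /\
  (exists I, Lint (fun t => u t * y t) a0 b0 I /\ 2 * PI * sp * I = m * A0) /\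
  (exists K, forall L : list R, NoDup L -> (forall t, In t L -> jump_set a0 b0 y u t) ->
     2 * PI * sum_list y L <= K).

From Stdlib Require Import Reals Lra Lia List ClassicalEpsilon.
From Coquelicot Require Import Coquelicot.
Open Scope R_scope.

(* Near the interface [s] the recovery sequence is the one-dimensional optimal profile for
   the double well, regularised by [nu > 0]: with [phi r = sqrt (W (z r) + nu^2)] and
   [T r = s + e * int_0^r 1/phi], the inverse [q] of [T] solves [e q' = phi q], so the profile
   [z clamp q] has energy density [(phi^2 + W) / e] on the layer [T (-1) < t < T 1], and the
   substitution [t = T r] bounds its energy by [int_{-1}^1 (phi^2 + W) / phi <= sigma + 4 nu].
   The layer has width [O(e / nu)], on which [y = y(s) + O(e / nu)] since [y] is Lipschitz.
   The profile differs from [u] only on the layer, so the mass [int u y] is restored by adding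
   [lam = O(e / nu)] times a fixed bump to the right of the layer, at the cost
   [O(e lam^2 + lam^2 / e)] because [W] is quadratic near its wells. Taking [nu = e^(1/4)]
   makes every error [O(nu)]. If [u] does not jump inside [(c, d)], [u] itself has zero
   energy. All integrals involved are Riemann integrals, which are gauge integrals and hence
   Lebesgue integrals. *)

(** * Riemann integrals are gauge integrals *)

Fixpoint SF_of_partition (a : R) (P : list (R * R * R)) : @SF_seq R :=
  match P with
  | nil => SF_nil a
  | (l, t, r) :: P' => SF_cons (l, t) (SF_of_partition r P')
  end.

Lemma is_partition_le P a b : is_partition a b P -> a <= b.
Proof.
  revert a; induction P as [|[[l t] r] P IH]; simpl; intros a H; [lra|].
  destruct H as (-> & H1 & _ & _ & H4). apply IH in H4. lra.
Qed.

Lemma SF_of_partition_h P a b : is_partition a b P -> SF_h (SF_of_partition a P) = a.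
Proof. destruct P as [|[[l t] r] P]; simpl; intros H; [|destruct H]; auto. Qed.

Lemma SF_of_partition_last P a b :
  is_partition a b P -> seq.last (SF_h (SF_of_partition a P)) (SF_lx (SF_of_partition a P)) = b.
Proof.
  revert a; induction P as [|[[l t] r] P IH]; simpl; intros a H; [exact H|].
  destruct H as (-> & _ & _ & _ & H4). exact (IH r H4).
Qed.

Lemma Riemann_sum_SF_of_partition f P a b :
  is_partition a b P -> Riemann_sum f (SF_of_partition a P) = rsum f P.
Proof.
  revert a; induction P as [|[[l t] r] P IH]; simpl; intros a H; [reflexivity|].
  destruct H as (-> & _ & _ & _ & H4).
  rewrite Riemann_sum_cons, (IH r H4); simpl. rewrite (SF_of_partition_h P r b H4).
  unfold plus, scal; simpl; unfold mult; simpl. ring.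
Qed.

Lemma SF_of_partition_pointed P a b :
  is_partition a b P -> pointed_subdiv (SF_of_partition a P).
Proof.
  revert a; induction P as [|[[l t] r] P IH]; simpl; intros a H i Hi.
  - unfold SF_size in Hi; simpl in Hi. lia.
  - destruct H as (-> & H1 & H2 & H3 & H4).
    rewrite SF_lx_cons, SF_ly_cons. destruct i as [|i]; simpl.
    + rewrite (SF_of_partition_h P r b H4). lra.
    + apply (IH r H4). rewrite SF_size_cons in Hi. lia.
Qed.

Lemma SF_of_partition_step P a b d : is_partition a b P -> 0 < d ->
  (forall l t r, In (l, t, r) P -> r - l < d) -> seq_step (SF_lx (SF_of_partition a P)) < d.
Proof.
  revert a; induction P as [|[[l t] r] P IH]; simpl; intros a H Hd Hf.
  - unfold seq_step; simpl. lra.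
  - destruct H as (-> & H1 & _ & _ & H4).
    assert (Hs := IH r H4 Hd (fun l0 t0 r0 Hin => Hf l0 t0 r0 (or_intror Hin))).
    rewrite SF_lx_cons. unfold seq_step, SF_lx in *; simpl in *.
    rewrite (SF_of_partition_h P r b H4) in Hs |- *.
    apply Rmax_lub_lt; [|exact Hs].
    assert (r - a < d) by (apply (Hf a t r); auto). rewrite Rabs_right; lra.
Qed.

Lemma fine_In g P l t r : fine g P -> In (l, t, r) P -> t - g t < l /\ r < t + g t.
Proof.
  induction P as [|[[l0 t0] r0] P IH]; simpl; [tauto|].
  intros (H1 & H2 & H3) [E|E]; [injection E; intros; subst|]; auto.
Qed.

(* A Riemann integral is a gauge integral with a constant gauge. *)
Lemma is_RInt_HK_integral f a b I : a <= b -> is_RInt f a b I -> HK_integral f a b I.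
Proof.
  intros Hab HI. split; [exact Hab|]. intros eps Heps.
  destruct (Req_dec a b) as [<-|Nab].
  - exists (fun _ => 1). split; [intros; lra|].
    assert (I = 0) as ->.
    { rewrite <- (is_RInt_unique _ _ _ _ HI). exact (RInt_point (V:=R_CompleteNormedModule) a f). }
    intros [|[[l t] r] P] HP _; simpl in *.
    + rewrite Rminus_0_r, Rabs_R0. lra.
    + destruct HP as (-> & H1 & _ & _ & H4). apply is_partition_le in H4. lra.
  - destruct (HI _ (locally_ball I (mkposreal eps Heps))) as [[d Hd] HP].
    exists (fun _ => d / 2). split; [intros; simpl; lra|].
    intros P Hpart Hfine.
    assert (Hst : seq_step (SF_lx (SF_of_partition a P)) < d).
    { apply (SF_of_partition_step P a b d Hpart Hd). intros l t r Hin.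
      destruct (fine_In _ _ _ _ _ Hfine Hin). lra. }
    specialize (HP (SF_of_partition a P) Hst).
    rewrite Rmin_left, Rmax_right, sign_eq_1 in HP by lra.
    specialize (HP (conj (SF_of_partition_pointed P a b Hpart)
      (conj (SF_of_partition_h P a b Hpart) (SF_of_partition_last P a b Hpart)))).
    rewrite <- (Riemann_sum_SF_of_partition f P a b Hpart).
    unfold ball in HP; simpl in HP; unfold AbsRing_ball, abs, minus, plus, opp in HP; simpl in HP.
    unfold scal in HP; simpl in HP; unfold mult in HP; simpl in HP.
    rewrite Rmult_1_l in HP. exact HP.
Qed.

Lemma Lint_RInt f a b : a <= b -> ex_RInt f a b -> Lint f a b (RInt f a b).
Proof.
  intros Hab Hex. split.
  - apply is_RInt_HK_integral; auto. exact (RInt_correct (V:=R_CompleteNormedModule) _ _ _ Hex).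
  - exists (RInt (fun t => Rabs (f t)) a b). apply is_RInt_HK_integral; auto.
    apply (RInt_correct (V:=R_CompleteNormedModule)). exact (ex_RInt_norm f a b Hex).
Qed.

Lemma ex_Lint_RInt f a b : a <= b -> ex_RInt f a b -> exists I, Lint f a b I.
Proof. intros. exists (RInt f a b). apply Lint_RInt; auto. Qed.

Lemma cousin_lemma g a b : (forall t, 0 < g t) -> a <= b ->
  exists P, is_partition a b P /\ fine g P.
Proof.
  intros Hg Hab.
  assert (Hsnoc : forall P a' x t r, is_partition a' x P -> fine g P -> x < r -> x <= t <= r ->
      t - g t < x -> r < t + g t -> is_partition a' r (P ++ (x, t, r) :: nil) /\ fine g (P ++ (x, t, r) :: nil)).
  { induction P as [|[[l t0] r0] P IH]; simpl; intros a' x t r HP HF Hxr Ht H1 H2.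
    - subst. repeat split; lra.
    - destruct HP as (-> & A1 & A2 & A3 & A4). destruct HF as (F1 & F2 & F3).
      destruct (IH r0 x t r A4 F3 Hxr Ht H1 H2). repeat split; auto. }
  set (E := fun x => a <= x <= b /\ exists P, is_partition a x P /\ fine g P).
  assert (Ea : E a) by (split; [lra| exists nil; simpl; auto]).
  destruct (completeness E) as [m [Hub Hlub]]; [exists b; intros x [Hx _]; lra| exists a; exact Ea|].
  assert (Ham : a <= m) by (apply Hub, Ea).
  assert (Hmb : m <= b) by (apply Hlub; intros x [Hx _]; lra).
  assert (Hx : exists x, E x /\ m - g m < x).
  { apply Classical_Prop.NNPP; intro Hn.
    assert (m <= m - g m).
    { apply Hlub. intros x Ex. apply Rnot_lt_le. intro Hl. apply Hn. eauto. }
    specialize (Hg m). lra. }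
  destruct Hx as [x [[Hxr [P [HP HF]]] Hxm]].
  assert (Hxm' : x <= m) by (apply Hub; split; eauto).
  destruct (Req_dec x b) as [<-|Nxb]; [eauto|].
  pose proof (Hg m).
  set (r := Rmin b (m + g m / 2)).
  assert (Hr : x < r /\ m <= r /\ r < m + g m).
  { unfold r. split; [|split]; [apply Rmin_glb_lt| apply Rmin_glb|]; try lra.
    apply Rle_lt_trans with (m + g m / 2); [apply Rmin_r| lra]. }
  assert (Er : E r).
  { split; [split; [lra| apply Rmin_l]|]. exists (P ++ (x, m, r) :: nil). apply Hsnoc; auto; lra. }
  assert (r <= m) by (apply Hub, Er).
  destruct (Rle_dec b (m + g m / 2)).
  - assert (r = b) as Erb by (apply Rmin_left; auto). rewrite Erb in Er. apply Er.
  - assert (r = m + g m / 2) by (apply Rmin_right; lra). lra.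
Qed.

Lemma fine_le g g' P : (forall t, g t <= g' t) -> fine g P -> fine g' P.
Proof.
  intros Hle. induction P as [|[[l t0] r0] P IH]; simpl; auto.
  intros (A1 & A2 & A3). pose proof (Hle t0). repeat split; try lra. auto.
Qed.

Lemma HK_integral_unique f a b I1 I2 : HK_integral f a b I1 -> HK_integral f a b I2 -> I1 = I2.
Proof.
  intros [Hab H1] [_ H2]. apply Classical_Prop.NNPP; intro Hn.
  set (eps := Rabs (I1 - I2) / 2).
  assert (Heps : 0 < eps) by (unfold eps; pose proof (Rabs_pos_lt (I1 - I2) ltac:(lra)); lra).
  destruct (H1 eps Heps) as [g1 [Hg1 K1]], (H2 eps Heps) as [g2 [Hg2 K2]].
  destruct (cousin_lemma (fun t => Rmin (g1 t) (g2 t)) a b) as [P [HP HF]]; auto.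
  { intro t. apply Rmin_glb_lt; auto. }
  specialize (K1 P HP (fine_le _ _ P (fun t => Rmin_l _ _) HF)).
  specialize (K2 P HP (fine_le _ _ P (fun t => Rmin_r _ _) HF)).
  assert (Rabs (I1 - I2) <= Rabs (rsum f P - I1) + Rabs (rsum f P - I2)).
  { replace (I1 - I2) with (-(rsum f P - I1) + (rsum f P - I2)) by ring.
    rewrite <- (Rabs_Ropp (rsum f P - I1)). apply Rabs_triang. }
  unfold eps in *. lra.
Qed.

Lemma continuous_Rplus (f g : R -> R) x :
  continuous f x -> continuous g x -> continuous (fun t => f t + g t) x.
Proof. exact (continuous_plus f g x). Qed.

Lemma continuous_Rmult (f g : R -> R) x :
  continuous f x -> continuous g x -> continuous (fun t => f t * g t) x.
Proof. exact (continuous_mult f g x). Qed.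

Lemma continuous_Rminus (f g : R -> R) x :
  continuous f x -> continuous g x -> continuous (fun t => f t - g t) x.
Proof. intros Hf Hg. apply continuous_Rplus; [exact Hf| exact (continuous_opp g x Hg)]. Qed.

Lemma continuous_Rdiv_const (f : R -> R) k x :
  continuous f x -> continuous (fun t => f t / k) x.
Proof. intros. apply continuous_Rmult; auto. apply continuous_const. Qed.

Lemma continuous_Rpow2 (f : R -> R) x : continuous f x -> continuous (fun t => f t ^ 2) x.
Proof.
  intros. apply (continuous_ext (fun t => f t * f t)); [intros; simpl; ring|].
  apply continuous_Rmult; auto.
Qed.

Ltac solve_continuous :=
  repeat match goal with
  | |- continuous (fun _ => ?k) _ => apply continuous_const
  | |- continuous (fun t => t) _ => apply continuous_id
  | |- continuous (fun t => @?f t + @?g t) _ => apply (continuous_Rplus f g)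
  | |- continuous (fun t => @?f t - @?g t) _ => apply (continuous_Rminus f g)
  | |- continuous (fun t => @?f t * @?g t) _ => apply (continuous_Rmult f g)
  | |- continuous (fun t => @?f t / ?k) _ => apply (continuous_Rdiv_const f k)
  | |- continuous (fun t => @?f t ^ 2) _ => apply (continuous_Rpow2 f)
  | |- continuous (fun t => Rabs (@?f t)) _ => apply (continuous_Rabs_comp f)
  | |- continuous (fun t => sqrt (@?f t)) _ => apply (continuous_sqrt_comp f)
  end.

Lemma ex_RInt_continuous_le (f : R -> R) a b :
  a <= b -> (forall t, a <= t <= b -> continuous f t) -> ex_RInt f a b.
Proof.
  intros Hab H. apply (ex_RInt_continuous (V:=R_CompleteNormedModule)).
  intros t Ht. rewrite Rmin_left, Rmax_right in Ht by lra. auto.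
Qed.

Lemma RInt_Rconst a b k : RInt (fun _ => k) a b = k * (b - a).
Proof. rewrite (RInt_const (V:=R_CompleteNormedModule)). unfold scal; simpl; unfold mult; simpl. ring. Qed.

Lemma RInt_Rplus (f g : R -> R) a b : ex_RInt f a b -> ex_RInt g a b ->
  RInt (fun t => f t + g t) a b = RInt f a b + RInt g a b.
Proof. exact (RInt_plus (V:=R_CompleteNormedModule) f g a b). Qed.

Lemma ex_RInt_Rplus (f g : R -> R) a b : ex_RInt f a b -> ex_RInt g a b ->
  ex_RInt (fun t => f t + g t) a b.
Proof. exact (ex_RInt_plus (V:=R_NormedModule) f g a b). Qed.

Lemma RInt_Rscal (f : R -> R) a b k : ex_RInt f a b -> RInt (fun t => k * f t) a b = k * RInt f a b.
Proof. exact (RInt_scal (V:=R_CompleteNormedModule) f a b k). Qed.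

Lemma ex_RInt_Rscal (f : R -> R) a b k : ex_RInt f a b -> ex_RInt (fun t => k * f t) a b.
Proof. exact (ex_RInt_scal (V:=R_NormedModule) f a b k). Qed.

Lemma RInt_Rminus (f g : R -> R) a b : ex_RInt f a b -> ex_RInt g a b ->
  RInt (fun t => f t - g t) a b = RInt f a b - RInt g a b.
Proof. exact (RInt_minus (V:=R_CompleteNormedModule) f g a b). Qed.

Lemma ex_RInt_Rminus (f g : R -> R) a b : ex_RInt f a b -> ex_RInt g a b ->
  ex_RInt (fun t => f t - g t) a b.
Proof. exact (ex_RInt_minus (V:=R_NormedModule) f g a b). Qed.

Lemma RInt_Chasles_R (f : R -> R) a b c : ex_RInt f a b -> ex_RInt f b c ->
  RInt f a c = RInt f a b + RInt f b c.
Proof. intros. symmetry. exact (RInt_Chasles (V:=R_CompleteNormedModule) f a b c H H0). Qed.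

Lemma RInt_le_const (f : R -> R) a b M : a <= b -> ex_RInt f a b ->
  (forall t, a < t < b -> f t <= M) -> RInt f a b <= M * (b - a).
Proof. intros. rewrite <- RInt_Rconst. apply RInt_le; auto. apply ex_RInt_const. Qed.

Lemma RInt_ext_le (f g : R -> R) a b : a <= b -> (forall t, a < t < b -> f t = g t) ->
  RInt f a b = RInt g a b.
Proof. intros. apply RInt_ext. intros t. rewrite Rmin_left, Rmax_right by lra. auto. Qed.

Lemma ex_RInt_ext_le (f g : R -> R) a b : a <= b -> (forall t, a < t < b -> f t = g t) ->
  ex_RInt g a b -> ex_RInt f a b.
Proof.
  intros Hab H. apply ex_RInt_ext. intros t. rewrite Rmin_left, Rmax_right by lra. intros; symmetry; auto.
Qed.

Lemma RInt_piecewise (f g1 g2 : R -> R) a p b : a <= p <= b ->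
  (forall t, a < t < p -> f t = g1 t) -> (forall t, p < t < b -> f t = g2 t) ->
  ex_RInt g1 a p -> ex_RInt g2 p b ->
  ex_RInt f a b /\ RInt f a b = RInt g1 a p + RInt g2 p b.
Proof.
  intros Hp H1 H2 E1 E2.
  assert (F1 : ex_RInt f a p) by (apply (ex_RInt_ext_le f g1); auto; lra).
  assert (F2 : ex_RInt f p b) by (apply (ex_RInt_ext_le f g2); auto; lra).
  split; [exact (ex_RInt_Chasles f a p b F1 F2)|].
  rewrite (RInt_Chasles_R f a p b F1 F2), (RInt_ext_le f g1 a p), (RInt_ext_le f g2 p b); auto; lra.
Qed.

Lemma RInt_abs_le_const (f : R -> R) a b M : a <= b -> ex_RInt f a b ->
  (forall t, a < t < b -> Rabs (f t) <= M) -> Rabs (RInt f a b) <= M * (b - a).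
Proof.
  intros Hab E H. apply Rle_trans with (RInt (fun t => Rabs (f t)) a b); [apply abs_RInt_le; auto|].
  apply RInt_le_const; auto. apply (ex_RInt_norm f a b E).
Qed.

Lemma ex_RInt_sub (f : R -> R) c a b d : c <= a -> a <= b -> b <= d -> ex_RInt f c d -> ex_RInt f a b.
Proof.
  intros Ha Hab Hb E. apply (ex_RInt_Chasles_2 f c a b); [lra|].
  apply (ex_RInt_Chasles_1 f c b d); auto; lra.
Qed.

Lemma RInt_supported (f : R -> R) c p q d : c <= p -> p <= q -> q <= d -> ex_RInt f c d ->
  (forall t, c < t < p -> f t = 0) -> (forall t, q < t < d -> f t = 0) ->
  RInt f c d = RInt f p q.
Proof.
  intros H1 H2 H3 E Hl Hr.
  rewrite (RInt_Chasles_R f c p d), (RInt_Chasles_R f p q d) by (apply (ex_RInt_sub f c _ _ d); auto; lra).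
  rewrite (RInt_ext_le f (fun _ => 0) c p), (RInt_ext_le f (fun _ => 0) q d), !RInt_Rconst; auto; lra.
Qed.

Definition FTC_on (U G : R -> R) (a b : R) : Prop :=
  forall t1 t2, a <= t1 -> t1 <= t2 -> t2 <= b -> is_RInt G t1 t2 (U t2 - U t1).

Lemma FTC_on_glue (U G : R -> R) a p b : FTC_on U G a p -> FTC_on U G p b -> FTC_on U G a b.
Proof.
  intros H1 H2 t1 t2 A1 A2 A3.
  destruct (Rle_dec t2 p); [apply H1; auto|]. destruct (Rle_dec p t1); [apply H2; auto|].
  replace (U t2 - U t1) with (plus (U p - U t1) (U t2 - U p)) by (unfold plus; simpl; ring).
  apply (is_RInt_Chasles G t1 p t2); [apply H1| apply H2]; lra.
Qed.

Lemma FTC_on_ext (U G U' G' : R -> R) a b : (forall t, a <= t <= b -> U t = U' t) ->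
  (forall t, a < t < b -> G t = G' t) -> FTC_on U' G' a b -> FTC_on U G a b.
Proof.
  intros HU HG H t1 t2 A1 A2 A3. rewrite !HU by lra.
  apply (is_RInt_ext G'); [|apply H; auto].
  intros x Hx. rewrite Rmin_left, Rmax_right in Hx by lra. symmetry. apply HG. lra.
Qed.

Lemma FTC_on_const a b k : FTC_on (fun _ => k) (fun _ => 0) a b.
Proof.
  intros t1 t2 _ _ _. replace (k - k) with (scal (t2 - t1) 0)
    by (unfold scal; simpl; unfold mult; simpl; ring).
  apply (is_RInt_const (V:=R_NormedModule)).
Qed.

Lemma FTC_on_derive (f df : R -> R) a b : (forall t, a <= t <= b -> is_derive f t (df t)) ->
  (forall t, a <= t <= b -> continuous df t) -> FTC_on f df a b.
Proof.
  intros Hd Hc t1 t2 A1 A2 A3.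
  apply (is_RInt_derive (V:=R_CompleteNormedModule) f df t1 t2);
    intros x Hx; rewrite Rmin_left, Rmax_right in Hx by lra; [apply Hd| apply Hc]; lra.
Qed.

Lemma FTC_on_plus (U1 G1 U2 G2 : R -> R) a b : FTC_on U1 G1 a b -> FTC_on U2 G2 a b ->
  FTC_on (fun t => U1 t + U2 t) (fun t => G1 t + G2 t) a b.
Proof.
  intros H1 H2 t1 t2 A1 A2 A3.
  replace (U1 t2 + U2 t2 - (U1 t1 + U2 t1)) with (plus (U1 t2 - U1 t1) (U2 t2 - U2 t1))
    by (unfold plus; simpl; ring).
  apply (is_RInt_plus (V:=R_NormedModule)); auto.
Qed.

Lemma FTC_on_scal (U G : R -> R) k a b : FTC_on U G a b -> FTC_on (fun t => k * U t) (fun t => k * G t) a b.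
Proof.
  intros H t1 t2 A1 A2 A3.
  replace (k * U t2 - k * U t1) with (scal k (U t2 - U t1)) by (unfold scal; simpl; unfold mult; simpl; ring).
  apply (is_RInt_scal (V:=R_NormedModule)); auto.
Qed.

Lemma W12_of_FTC_on c d (U G : R -> R) : c <= d ->
  ex_RInt U c d -> ex_RInt (fun t => U t ^ 2) c d ->
  ex_RInt G c d -> ex_RInt (fun t => G t ^ 2) c d ->
  FTC_on U G c d -> W12 c d U G.
Proof.
  intros Hcd E1 E2 E3 E4 HF.
  split; [|split; [|split; [|split]]]; auto using ex_Lint_RInt.
  intros t1 t2 H1 H2 H3. apply is_RInt_HK_integral; auto. apply HF; lra.
Qed.

(** * The optimal transition profile *)

Definition clamp (r : R) : R := (Rabs (r + 1) - Rabs (r - 1)) / 2.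

Lemma continuous_clamp r : continuous clamp r.
Proof. unfold clamp. solve_continuous. Qed.

Lemma clamp_id r : -1 <= r <= 1 -> clamp r = r.
Proof. intros. unfold clamp. rewrite Rabs_right, Rabs_left1 by lra. field. Qed.

Lemma clamp_le_m1 r : r <= -1 -> clamp r = -1.
Proof. intros. unfold clamp. rewrite !Rabs_left1 by lra. field. Qed.

Lemma clamp_ge_1 r : 1 <= r -> clamp r = 1.
Proof. intros. unfold clamp. rewrite !Rabs_right by lra. field. Qed.

Lemma clamp_bound r : -1 <= clamp r <= 1.
Proof.
  destruct (Rle_dec r (-1)); [rewrite clamp_le_m1; lra|].
  destruct (Rle_dec 1 r); [rewrite clamp_ge_1; lra| rewrite clamp_id; lra].
Qed.

Definition profile_ok (Wz : R -> R) (nu e : R) : Prop :=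
  (forall r, continuous Wz r) /\ (forall r, 0 <= Wz r) /\ 0 < nu /\ 0 < e.

(* The optimal profile for the potential [Wz], regularised by [nu], at scale [e] and centred
   at [s]: it reaches level [r] in [-1, 1] at the point [rescale_inv r], and
   [e * rescale'(t) = phi (rescale t)] is the equipartition relation [e q' = sqrt (Wz q)]
   up to [nu]. *)
Section OptimalProfile.

Variables (Wz : R -> R) (nu e s : R).
Hypothesis Hok : profile_ok Wz nu e.

Definition phi (r : R) : R := sqrt (Wz (clamp r) + nu ^ 2).
Definition rescale_inv (r : R) : R := s + e * RInt (fun p => / phi p) 0 r.
Definition rescale (t : R) : R := epsilon (inhabits 0) (fun r => rescale_inv r = t).

Lemma phi_ge_nu r : nu <= phi r.
Proof.
  destruct Hok as (_ & HWp & Hnu & _). unfold phi.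
  rewrite <- (sqrt_pow2 nu) at 1 by lra. apply sqrt_le_1_alt. specialize (HWp (clamp r)). lra.
Qed.

Lemma phi_pos r : 0 < phi r.
Proof. pose proof (phi_ge_nu r). destruct Hok as (_ & _ & Hnu & _). lra. Qed.

Lemma continuous_phi r : continuous phi r.
Proof.
  destruct Hok as (HWc & _). unfold phi. solve_continuous.
  apply (continuous_comp clamp Wz); [apply continuous_clamp| apply HWc].
Qed.

Lemma continuous_inv_phi r : continuous (fun p => / phi p) r.
Proof. apply continuous_Rinv_comp; [apply continuous_phi| pose proof (phi_pos r); lra]. Qed.

Lemma phi_bounded : exists M, 0 < M /\ forall r, phi r <= M.
Proof.
  destruct Hok as (HWc & HWp & Hnu & _).
  destruct (continuity_ab_maj Wz (-1) 1) as [mx [Hmx _]];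
    [lra| intros; apply continuity_pt_filterlim, HWc|].
  exists (sqrt (Wz mx + nu ^ 2)). split.
  - apply sqrt_lt_R0. specialize (HWp mx). nra.
  - intros r. apply sqrt_le_1_alt. specialize (Hmx (clamp r) (clamp_bound r)). lra.
Qed.

Lemma ex_RInt_inv_phi a b : ex_RInt (fun p => / phi p) a b.
Proof. apply (ex_RInt_continuous (V:=R_CompleteNormedModule)). intros. apply continuous_inv_phi. Qed.

Lemma is_derive_rescale_inv r : is_derive rescale_inv r (e * / phi r).
Proof.
  unfold rescale_inv.
  replace (e * / phi r) with (plus zero (e * / phi r)) by (unfold plus, zero; simpl; ring).
  apply (is_derive_plus (K:=R_AbsRing) (V:=R_NormedModule) (fun _ => s));
    [apply (is_derive_const (K:=R_AbsRing) (V:=R_NormedModule))|].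
  apply is_derive_scal, (is_derive_RInt (fun p => / phi p) (fun r => RInt (fun p => / phi p) 0 r) 0 r).
  - apply filter_forall. intros x. apply (RInt_correct (V:=R_CompleteNormedModule)), ex_RInt_inv_phi.
  - apply continuous_inv_phi.
Qed.

Lemma rescale_inv_0 : rescale_inv 0 = s.
Proof. unfold rescale_inv. rewrite RInt_point. unfold zero; simpl. ring. Qed.

Lemma rescale_inv_sub r1 r2 : rescale_inv r2 - rescale_inv r1 = e * RInt (fun p => / phi p) r1 r2.
Proof.
  unfold rescale_inv. rewrite (RInt_Chasles_R _ 0 r1 r2) by apply ex_RInt_inv_phi. ring.
Qed.

Lemma rescale_inv_sub_le r1 r2 : r1 <= r2 -> rescale_inv r2 - rescale_inv r1 <= e * (r2 - r1) / nu.
Proof.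
  intros Hr. rewrite rescale_inv_sub. destruct Hok as (_ & _ & Hnu & He).
  assert (RInt (fun p => / phi p) r1 r2 <= / nu * (r2 - r1)).
  { apply RInt_le_const; auto using ex_RInt_inv_phi.
    intros t _. apply Rinv_le_contravar; auto using phi_ge_nu. }
  unfold Rdiv. rewrite Rmult_assoc, (Rmult_comm (r2 - r1)). apply Rmult_le_compat_l; lra.
Qed.

Lemma rescale_inv_sub_ge M r1 r2 : 0 < M -> (forall r, phi r <= M) -> r1 <= r2 ->
  e * (r2 - r1) / M <= rescale_inv r2 - rescale_inv r1.
Proof.
  intros HM HB Hr. rewrite rescale_inv_sub. destruct Hok as (_ & _ & _ & He).
  assert (/ M * (r2 - r1) <= RInt (fun p => / phi p) r1 r2).
  { rewrite <- RInt_Rconst. apply RInt_le; auto using ex_RInt_inv_phi, ex_RInt_const.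
    intros t _. apply Rinv_le_contravar; auto using phi_pos. }
  unfold Rdiv. rewrite Rmult_assoc, (Rmult_comm (r2 - r1)). apply Rmult_le_compat_l; lra.
Qed.

Lemma rescale_inv_lt r1 r2 : r1 < r2 -> rescale_inv r1 < rescale_inv r2.
Proof.
  intros Hr. destruct phi_bounded as [M [HM HB]].
  pose proof (rescale_inv_sub_ge M r1 r2 HM HB (Rlt_le _ _ Hr)). destruct Hok as (_ & _ & _ & He).
  assert (0 < e * (r2 - r1) / M) by (apply Rdiv_lt_0_compat; nra). lra.
Qed.

Lemma rescale_inv_inj r1 r2 : rescale_inv r1 = rescale_inv r2 -> r1 = r2.
Proof.
  intros. destruct (Rtotal_order r1 r2) as [Hl|[Hl|Hl]]; auto;
    apply rescale_inv_lt in Hl; lra.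
Qed.

(* [rescale_inv] grows at least linearly, so the intermediate value theorem applies. *)
Lemma rescale_inv_surj t : exists r, rescale_inv r = t.
Proof.
  destruct phi_bounded as [M [HM HB]]. destruct Hok as (_ & _ & _ & He).
  assert (Hc : continuity rescale_inv).
  { intro r. apply continuity_pt_filterlim, (ex_derive_continuous (K:=R_AbsRing) (V:=R_NormedModule)).
    eexists. apply is_derive_rescale_inv. }
  set (r0 := (t - s) * M / e).
  destruct (Rle_dec s t) as [Hst|Hst].
  - assert (Hr0 : 0 <= r0) by (unfold r0, Rdiv; apply Rmult_le_pos; [nra| left; apply Rinv_0_lt_compat; lra]).
    pose proof (rescale_inv_sub_ge M 0 r0 HM HB Hr0) as Hgrow. rewrite rescale_inv_0 in Hgrow.
    replace (e * (r0 - 0) / M) with (t - s) in Hgrow by (unfold r0; field; lra).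
    destruct (IVT_gen rescale_inv 0 r0 t Hc) as [r [_ Hr]]; eauto.
    rewrite rescale_inv_0, Rmin_left, Rmax_right; lra.
  - assert (Hr0 : r0 <= 0).
    { unfold r0, Rdiv. rewrite Rmult_assoc. apply Rmult_le_0_r; [lra|].
      apply Rmult_le_pos; [lra| left; apply Rinv_0_lt_compat; lra]. }
    pose proof (rescale_inv_sub_ge M r0 0 HM HB Hr0) as Hgrow. rewrite rescale_inv_0 in Hgrow.
    replace (e * (0 - r0) / M) with (s - t) in Hgrow by (unfold r0; field; lra).
    destruct (IVT_gen rescale_inv r0 0 t Hc) as [r [_ Hr]]; eauto.
    rewrite rescale_inv_0, Rmin_left, Rmax_right; lra.
Qed.

Lemma rescale_invK t : rescale_inv (rescale t) = t.
Proof. exact (epsilon_spec (inhabits 0) (fun r => rescale_inv r = t) (rescale_inv_surj t)). Qed.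

Lemma rescaleK r : rescale (rescale_inv r) = r.
Proof. apply rescale_inv_inj, rescale_invK. Qed.

Lemma rescale_le t1 t2 : t1 <= t2 -> rescale t1 <= rescale t2.
Proof.
  intros. apply Rnot_lt_le. intro Hl. apply rescale_inv_lt in Hl. rewrite !rescale_invK in Hl. lra.
Qed.

Lemma rescale_lt_iff t r : t < rescale_inv r <-> rescale t < r.
Proof.
  split; intros H.
  - apply Rnot_le_lt. intros [Hl|E].
    + apply rescale_inv_lt in Hl. rewrite rescale_invK in Hl. lra.
    + rewrite E, rescale_invK in H. lra.
  - rewrite <- (rescale_invK t). apply rescale_inv_lt, H.
Qed.

Lemma rescale_gt_iff t r : rescale_inv r < t <-> r < rescale t.
Proof.
  split; intros H.
  - apply Rnot_le_lt. intros [Hl|E].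
    + apply rescale_inv_lt in Hl. rewrite rescale_invK in Hl. lra.
    + rewrite <- E, rescale_invK in H. lra.
  - rewrite <- (rescale_invK t). apply rescale_inv_lt, H.
Qed.

Lemma continuous_rescale t : continuous rescale t.
Proof.
  apply continuity_pt_filterlim, continuity_pt_locally. intros [eps Heps].
  set (r := rescale t).
  assert (A1 : rescale_inv (r - eps) < t) by (apply rescale_gt_iff; unfold r; lra).
  assert (A2 : t < rescale_inv (r + eps)) by (apply rescale_lt_iff; unfold r; lra).
  assert (Hd : 0 < Rmin (t - rescale_inv (r - eps)) (rescale_inv (r + eps) - t))
    by (apply Rmin_glb_lt; lra).
  exists (mkposreal _ Hd). intros t' Ht'. simpl in *.
  unfold ball in Ht'; simpl in Ht'; unfold AbsRing_ball, abs, minus, plus, opp in Ht'; simpl in Ht'.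
  pose proof (Rmin_l (t - rescale_inv (r - eps)) (rescale_inv (r + eps) - t)).
  pose proof (Rmin_r (t - rescale_inv (r - eps)) (rescale_inv (r + eps) - t)).
  apply Rabs_def2 in Ht'. apply Rabs_def1.
  - cut (rescale t' < r + eps); [lra|]. apply rescale_lt_iff. lra.
  - cut (r - eps < rescale t'); [lra|]. apply rescale_gt_iff. lra.
Qed.

Lemma RInt_comp_rescale (h : R -> R) a b : (forall r, continuous h r) ->
  ex_RInt (fun t => h (rescale t)) (rescale_inv a) (rescale_inv b) /\
  RInt (fun t => h (rescale t)) (rescale_inv a) (rescale_inv b) = RInt (fun r => e * / phi r * h r) a b.
Proof.
  intros Hh.
  assert (Hc : forall t, continuous (fun t => h (rescale t)) t)
    by (intros; apply (continuous_comp rescale h); auto using continuous_rescale).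
  split; [apply (ex_RInt_continuous (V:=R_CompleteNormedModule)); auto|].
  symmetry. apply is_RInt_unique.
  apply (is_RInt_ext (fun r => scal (e * / phi r) (h (rescale (rescale_inv r))))).
  - intros x _. rewrite rescaleK. reflexivity.
  - apply (is_RInt_comp (V:=R_CompleteNormedModule) (fun t => h (rescale t))); auto.
    intros. split; [apply is_derive_rescale_inv|].
    apply continuous_Rmult; [apply continuous_const| apply continuous_inv_phi].
Qed.

Lemma is_RInt_phi_rescale t1 t2 :
  is_RInt (fun t => phi (rescale t) / e) t1 t2 (rescale t2 - rescale t1).
Proof.
  destruct Hok as (_ & _ & _ & He).
  destruct (RInt_comp_rescale (fun r => phi r / e) (rescale t1) (rescale t2)) as [E1 E2].
  { intros r. apply continuous_Rdiv_const, continuous_phi. }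
  rewrite !rescale_invK in E1, E2.
  replace (rescale t2 - rescale t1) with (RInt (fun t => phi (rescale t) / e) t1 t2).
  - apply (RInt_correct (V:=R_CompleteNormedModule)); auto.
  - rewrite E2, <- (Rmult_1_l (rescale t2 - rescale t1)), <- RInt_Rconst.
    apply RInt_ext. intros x _. pose proof (phi_pos x). change (e * / phi x * (phi x / e) = 1). field. lra.
Qed.

Lemma rescale_le_m1 t : t <= rescale_inv (-1) -> rescale t <= -1.
Proof. intros. rewrite <- (rescaleK (-1)). apply rescale_le; auto. Qed.

Lemma rescale_ge_1 t : rescale_inv 1 <= t -> 1 <= rescale t.
Proof. intros. rewrite <- (rescaleK 1). apply rescale_le; auto. Qed.

Lemma rescale_bound t : rescale_inv (-1) <= t <= rescale_inv 1 -> -1 <= rescale t <= 1.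
Proof. intros. rewrite <- (rescaleK (-1)), <- (rescaleK 1). split; apply rescale_le; lra. Qed.

Lemma rescale_inv_layer :
  rescale_inv (-1) < s < rescale_inv 1 /\
  s - rescale_inv (-1) <= e / nu /\ rescale_inv 1 - s <= e / nu.
Proof.
  destruct Hok as (_ & _ & Hnu & _).
  pose proof (rescale_inv_lt (-1) 0 ltac:(lra)). pose proof (rescale_inv_lt 0 1 ltac:(lra)).
  pose proof (rescale_inv_sub_le (-1) 0 ltac:(lra)) as Hl. pose proof (rescale_inv_sub_le 0 1 ltac:(lra)) as Hr.
  rewrite rescale_inv_0 in *.
  replace (e * (0 - -1) / nu) with (e / nu) in Hl by (field; lra).
  replace (e * (1 - 0) / nu) with (e / nu) in Hr by (field; lra).
  lra.
Qed.

Lemma FTC_on_rescale a b : FTC_on rescale (fun t => phi (rescale t) / e) a b.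
Proof. intros t1 t2 _ _ _. apply is_RInt_phi_rescale. Qed.

Definition layer_density (r : R) : R := (phi r ^ 2 + Wz (clamp r)) / e.

Lemma continuous_layer_density r : continuous layer_density r.
Proof.
  destruct Hok as (HWc & _). unfold layer_density. solve_continuous.
  - apply continuous_phi.
  - apply (continuous_comp clamp Wz); [apply continuous_clamp| apply HWc].
Qed.

Lemma layer_density_ge0 r : 0 <= layer_density r.
Proof.
  destruct Hok as (_ & HWp & _ & He). unfold layer_density.
  pose proof (pow2_ge_0 (phi r)). pose proof (HWp (clamp r)).
  apply Rmult_le_pos; [lra| left; apply Rinv_0_lt_compat; lra].
Qed.

(* Changing variables to the level [r], the layer energy becomes
   [(phi^2 + Wz) / phi <= 2 sqrt Wz + 2 nu] integrated over [-1, 1]. *)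
Lemma layer_energy_le :
  ex_RInt (fun t => layer_density (rescale t)) (rescale_inv (-1)) (rescale_inv 1) /\
  RInt (fun t => layer_density (rescale t)) (rescale_inv (-1)) (rescale_inv 1)
    <= 2 * RInt (fun r => sqrt (Wz r)) (-1) 1 + 4 * nu.
Proof.
  destruct Hok as (HWc & HWp & Hnu & He).
  destruct (RInt_comp_rescale layer_density (-1) 1 continuous_layer_density) as [E1 ->].
  split; auto.
  assert (Es : ex_RInt (fun r => sqrt (Wz r)) (-1) 1).
  { apply ex_RInt_continuous_le; [lra|]. intros. apply continuous_sqrt_comp, HWc. }
  replace (2 * RInt (fun r => sqrt (Wz r)) (-1) 1 + 4 * nu)
    with (RInt (fun r => 2 * sqrt (Wz r) + 2 * nu) (-1) 1)
    by (rewrite RInt_Rplus, RInt_Rscal, RInt_Rconst; [lra| auto| apply ex_RInt_Rscal, Es| apply ex_RInt_const]).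
  apply RInt_le; [lra| | |].
  - apply ex_RInt_continuous_le; [lra|]. intros.
    apply continuous_Rmult; [apply continuous_Rmult; [apply continuous_const| apply continuous_inv_phi]|].
    apply continuous_layer_density.
  - apply ex_RInt_Rplus; [apply ex_RInt_Rscal, Es| apply ex_RInt_const].
  - intros r Hr. unfold layer_density, phi. rewrite clamp_id by lra.
    pose proof (HWp r). set (p := sqrt (Wz r + nu ^ 2)).
    assert (Hp : 0 < p) by (apply sqrt_lt_R0; nra).
    assert (Hp2 : p ^ 2 = Wz r + nu ^ 2) by (apply pow2_sqrt; nra).
    assert (Hpw : p <= sqrt (Wz r) + nu).
    { rewrite <- (sqrt_pow2 (sqrt (Wz r) + nu)) by (pose proof (sqrt_pos (Wz r)); lra).
      apply sqrt_le_1_alt. pose proof (sqrt_pos (Wz r)). pose proof (pow2_sqrt (Wz r) H). nra. }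
    replace (e * / p * ((p ^ 2 + Wz r) / e)) with ((p ^ 2 + Wz r) / p) by (field; lra).
    apply Rle_trans with (2 * p); [|lra].
    apply (Rmult_le_reg_r p); [lra|]. unfold Rdiv. rewrite Rmult_assoc, Rinv_l, Rmult_1_r by lra. nra.
Qed.

End OptimalProfile.

Definition W_oriented (W : R -> R) (z : R) : R -> R := fun r => W (z * r).

Lemma continuous_W W r : W_ok W -> continuous W r.
Proof. intros [HW _]. apply continuity_pt_filterlim, HW. Qed.

Lemma W_wells W z : W_ok W -> (z = 1 \/ z = -1) -> W z = 0 /\ W (- z) = 0.
Proof. intros (_ & _ & H & _) Hz. split; apply H; destruct Hz; subst; lra. Qed.

Lemma continuous_W_oriented W z r : W_ok W -> continuous (W_oriented W z) r.
Proof. intros HW. apply (continuous_comp (fun r => z * r) W); [solve_continuous| apply continuous_W, HW]. Qed.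

Lemma profile_ok_W_oriented W z nu e : W_ok W -> 0 < nu -> 0 < e -> profile_ok (W_oriented W z) nu e.
Proof.
  intros HW Hnu He. split; [|split; [|split]]; auto.
  - intros r. apply continuous_W_oriented, HW.
  - intros r. apply HW.
Qed.

(* Two applications of the mean value theorem. *)
Lemma taylor_quadratic_bound (f f1 f2 : R -> R) z rho K :
  f z = 0 -> f1 z = 0 ->
  (forall c0, Rabs (c0 - z) <= rho -> derivable_pt_lim f c0 (f1 c0) /\ derivable_pt_lim f1 c0 (f2 c0)) ->
  (forall c0, Rabs (c0 - z) <= rho -> Rabs (f2 c0) <= K) ->
  forall h, Rabs h <= rho -> f (z + h) <= K * h ^ 2.
Proof.
  intros Fz F1z Hd HK h Hh. apply Rabs_le_between in Hh.
  assert (Dl : forall c0, Rmin z (z + h) <= c0 <= Rmax z (z + h) ->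
      derivable_pt_lim f c0 (f1 c0) /\ derivable_pt_lim f1 c0 (f2 c0)).
  { intros c0 Hc0. apply Hd, Rabs_le.
    destruct (Rle_dec 0 h); [rewrite Rmin_left, Rmax_right in Hc0| rewrite Rmin_right, Rmax_left in Hc0]; lra. }
  destruct (Rtotal_order h 0) as [Hn|[->|Hp]].
  - rewrite Rmin_right, Rmax_left in Dl by lra.
    destruct (MVT_cor2 f f1 (z + h) z) as [c1 [E1 Hc1]]; [lra| intros; apply Dl; lra|].
    destruct (MVT_cor2 f1 f2 c1 z) as [c2 [E2 Hc2]]; [lra| intros; apply Dl; lra|].
    pose proof (HK c2 ltac:(apply Rabs_le; lra)) as Kc. apply Rabs_le_between in Kc.
    assert (f (z + h) = f2 c2 * (c1 - z) * h) by nra.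
    assert (f2 c2 * (c1 - z) >= K * h) by nra. nra.
  - rewrite Rplus_0_r, Fz. nra.
  - rewrite Rmin_left, Rmax_right in Dl by lra.
    destruct (MVT_cor2 f f1 z (z + h)) as [c1 [E1 Hc1]]; [lra| intros; apply Dl; lra|].
    destruct (MVT_cor2 f1 f2 z c1) as [c2 [E2 Hc2]]; [lra| intros; apply Dl; lra|].
    pose proof (HK c2 ltac:(apply Rabs_le; lra)) as Kc. apply Rabs_le_between in Kc.
    assert (f (z + h) = f2 c2 * (c1 - z) * h) by nra.
    assert (f2 c2 * (c1 - z) <= K * h) by nra. nra.
Qed.

Lemma W_quadratic_near_well W z : W_ok W -> (z = 1 \/ z = -1) ->
  exists rho K, 0 < rho /\ 0 <= K /\ forall h, Rabs h <= rho -> W (z + h) <= K * h ^ 2.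
Proof.
  intros HW Hz. pose proof (proj1 (W_wells W z HW Hz)) as Wz.
  destruct HW as (_ & Hpos & _ & Hsm).
  destruct (Hsm z Hz) as [del [Hdel [W1 [W2 Hd]]]].
  assert (Dloc : forall c0, Rabs (c0 - z) <= del / 2 ->
      derivable_pt_lim W c0 (W1 c0) /\ derivable_pt_lim W1 c0 (W2 c0))
    by (intros c0 Hc0; destruct (Hd c0) as (A & B & _); [lra| auto]).
  destruct (continuity_ab_maj (fun r => Rabs (W2 r)) (z - del / 2) (z + del / 2)) as [mx [Hmx _]]; [lra|..].
  { intros c0 Hc0. apply continuity_pt_filterlim, continuous_Rabs_comp, continuity_pt_filterlim.
    apply (Hd c0). apply Rabs_def1; lra. }
  assert (HW1 : W1 z = 0).
  { destruct (Dloc z) as [D1 _]; [rewrite Rminus_diag, Rabs_R0; lra|].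
    rewrite <- (derive_pt_eq_0 W z (W1 z) (exist _ (W1 z) D1) D1).
    apply (deriv_minimum W (z - 1) (z + 1) z); try lra.
    intros x _ _. rewrite Wz. apply Hpos. }
  exists (del / 2), (Rabs (W2 mx)). split; [lra|]. split; [apply Rabs_pos|].
  apply (taylor_quadratic_bound W W1 W2); auto.
  intros c0 Hc0. apply Rabs_le_between in Hc0. apply Hmx. lra.
Qed.

Lemma RInt_sqrt_W_oriented W sigma z : W_ok W -> Lint (fun r => sqrt (W r)) (-1) 1 (sigma / 2) ->
  (z = 1 \/ z = -1) -> RInt (fun r => sqrt (W_oriented W z r)) (-1) 1 = sigma / 2.
Proof.
  intros HW HL Hz. unfold W_oriented.
  assert (E0 : ex_RInt (fun r => sqrt (W r)) (-1) 1).
  { apply ex_RInt_continuous_le; [lra|]. intros. apply continuous_sqrt_comp, continuous_W, HW. }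
  rewrite (HK_integral_unique _ _ _ _ _ (proj1 HL)
    (is_RInt_HK_integral (fun r => sqrt (W r)) (-1) 1 _ ltac:(lra) (RInt_correct (V:=R_CompleteNormedModule) _ _ _ E0))).
  destruct Hz as [-> | ->]; [apply RInt_ext; intros; rewrite Rmult_1_l; reflexivity|].
  pose proof (RInt_comp_lin (V:=R_CompleteNormedModule) (fun r => sqrt (W r)) (-1) 0 (-1) 1) as HC.
  replace (-1 * -1 + 0) with 1 in HC by ring. replace (-1 * 1 + 0) with (-1) in HC by ring.
  specialize (HC (ex_RInt_swap (V:=R_NormedModule) _ _ _ E0)).
  assert (Eg : ex_RInt (fun r => sqrt (W (-1 * r))) (-1) 1).
  { apply ex_RInt_continuous_le; [lra|]. intros. apply continuous_sqrt_comp.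
    apply (continuous_comp (fun r => -1 * r) W); [solve_continuous| apply continuous_W, HW]. }
  assert (Hopp : RInt (fun r => - sqrt (W (-1 * r))) (-1) 1 = - RInt (fun r => sqrt (W (-1 * r))) (-1) 1)
    by exact (RInt_opp (V:=R_CompleteNormedModule) _ _ _ Eg).
  assert (Hswap : RInt (fun r => sqrt (W r)) 1 (-1) = - RInt (fun r => sqrt (W r)) (-1) 1)
    by (rewrite <- (opp_RInt_swap (V:=R_CompleteNormedModule) _ _ _ E0); reflexivity).
  assert (HC' : RInt (fun r => - sqrt (W (-1 * r))) (-1) 1 = RInt (fun r => sqrt (W r)) 1 (-1)).
  { rewrite <- HC. apply RInt_ext. intros x _. rewrite Rplus_0_r.
    unfold scal; simpl; unfold mult; simpl. ring. }
  lra.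
Qed.

(** * The competitor: transition profile plus a mass-correcting bump *)

Definition posp (x : R) : R := (x + Rabs x) / 2.
Definition bump (al be t : R) : R := posp ((t - al) * (be - t)) ^ 2.
Definition bump_deriv (al be t : R) : R := 2 * posp ((t - al) * (be - t)) * (al + be - 2 * t).

Section Bump.

Variables al be : R.
Hypothesis Hab : al < be.

Lemma continuous_bump t : continuous (bump al be) t.
Proof. unfold bump, posp. solve_continuous. Qed.

Lemma continuous_bump_deriv t : continuous (bump_deriv al be) t.
Proof. unfold bump_deriv, posp. solve_continuous. Qed.

Lemma bump_out t : t <= al \/ be <= t -> bump al be t = 0 /\ bump_deriv al be t = 0.
Proof.
  intros Ht. unfold bump, bump_deriv, posp.
  rewrite Rabs_left1 by (destruct Ht; nra). split; field.
Qed.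

Lemma bump_in t : al <= t <= be -> bump al be t = ((t - al) * (be - t)) ^ 2 /\
  bump_deriv al be t = 2 * ((t - al) * (be - t)) * (al + be - 2 * t).
Proof. intros. unfold bump, bump_deriv, posp. rewrite Rabs_right by nra. split; field. Qed.

Lemma bump_bound t : 0 <= bump al be t <= ((be - al) ^ 2 / 4) ^ 2.
Proof.
  assert (Hb : 0 <= ((be - al) ^ 2 / 4) ^ 2) by apply pow2_ge_0.
  destruct (Rle_dec t al) as [H|H]; [rewrite (proj1 (bump_out t (or_introl H))); lra|].
  destruct (Rle_dec be t) as [H'|H']; [rewrite (proj1 (bump_out t (or_intror H'))); lra|].
  rewrite (proj1 (bump_in t ltac:(lra))).
  assert (0 <= (t - al) * (be - t) <= (be - al) ^ 2 / 4)
    by (pose proof (pow2_ge_0 ((t - al) - (be - t))); split; nra).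
  split; [apply pow2_ge_0| apply pow_incr; lra].
Qed.

Lemma bump_deriv_bound t : Rabs (bump_deriv al be t) <= 2 * ((be - al) ^ 2 / 4) * (be - al).
Proof.
  assert (Hpos : 0 <= 2 * ((be - al) ^ 2 / 4) * (be - al)) by (pose proof (pow2_ge_0 (be - al)); nra).
  destruct (Rle_dec t al) as [H|H]; [rewrite (proj2 (bump_out t (or_introl H))), Rabs_R0; lra|].
  destruct (Rle_dec be t) as [H'|H']; [rewrite (proj2 (bump_out t (or_intror H'))), Rabs_R0; lra|].
  rewrite (proj2 (bump_in t ltac:(lra))).
  assert (0 <= (t - al) * (be - t) <= (be - al) ^ 2 / 4)
    by (pose proof (pow2_ge_0 ((t - al) - (be - t))); split; nra).
  rewrite Rabs_mult, (Rabs_right (2 * ((t - al) * (be - t)))) by lra.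
  apply Rmult_le_compat; try apply Rabs_pos; try lra. apply Rabs_le. lra.
Qed.

Lemma FTC_on_bump a b : a <= al -> be <= b -> FTC_on (bump al be) (bump_deriv al be) a b.
Proof.
  intros Ha Hb.
  assert (Hout : forall a' b', (b' <= al \/ be <= a') -> FTC_on (bump al be) (bump_deriv al be) a' b').
  { intros a' b' Hab'. apply (FTC_on_ext _ _ (fun _ => 0) (fun _ => 0)); [| |apply FTC_on_const];
      intros t Ht; apply bump_out; lra. }
  apply FTC_on_glue with al; [apply Hout; lra|].
  apply FTC_on_glue with be; [|apply Hout; lra].
  apply (FTC_on_ext _ _ (fun t => ((t - al) * (be - t)) ^ 2)
                        (fun t => 2 * ((t - al) * (be - t)) * (al + be - 2 * t)));
    [intros; apply bump_in; lra| intros; apply bump_in; lra|].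
  apply FTC_on_derive; [intros; auto_derive; auto; ring| intros; solve_continuous].
Qed.

Lemma RInt_bump_mul_pos (y : R -> R) c d : c <= al -> be <= d ->
  (forall t, c <= t <= d -> continuous y t) -> (forall t, c <= t <= d -> 0 < y t) ->
  ex_RInt (fun t => bump al be t * y t) c d /\ 0 < RInt (fun t => bump al be t * y t) c d.
Proof.
  intros Hc Hd Hy Hyp.
  assert (Ea : forall a b, c <= a -> a <= b -> b <= d -> ex_RInt (fun t => bump al be t * y t) a b).
  { intros a b Ha Hab' Hb. apply ex_RInt_continuous_le; auto. intros.
    apply continuous_Rmult; [apply continuous_bump| apply Hy; lra]. }
  split; [apply Ea; lra|].
  rewrite (RInt_Chasles_R _ c al d), (RInt_Chasles_R _ al be d) by (apply Ea; lra).
  rewrite (RInt_ext_le _ (fun _ => 0) c al), (RInt_ext_le _ (fun _ => 0) be d), !RInt_Rconst;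
    try (intros t Ht; rewrite (proj1 (bump_out t ltac:(lra))); ring); try lra.
  assert (0 < RInt (fun t => bump al be t * y t) al be); [|lra].
  apply RInt_gt_0; auto.
  - intros t Ht. rewrite (proj1 (bump_in t ltac:(lra))).
    apply Rmult_lt_0_compat; [apply pow_lt; nra| apply Hyp; lra].
  - intros. apply continuous_Rmult; [apply continuous_bump| apply Hy; lra].
Qed.

End Bump.

Section Competitor.

Variables (W : R -> R) (z nu e s : R).
Hypothesis Hok : profile_ok (W_oriented W z) nu e.

Local Notation T := (rescale_inv (W_oriented W z) nu e s).
Local Notation Q := (rescale (W_oriented W z) nu e s).
Local Notation phiz := (phi (W_oriented W z) nu).

Definition profile (t : R) : R := z * clamp (Q t).

Definition profile_deriv (t : R) : R :=
  if Rlt_dec (T (-1)) t then if Rlt_dec t (T 1) then z * (phiz (Q t) / e) else 0 else 0.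

Lemma profile_left t : t <= T (-1) -> profile t = - z.
Proof. intros. unfold profile. rewrite clamp_le_m1; [ring| apply rescale_le_m1; auto]. Qed.

Lemma profile_right t : T 1 <= t -> profile t = z.
Proof. intros. unfold profile. rewrite clamp_ge_1; [ring| apply rescale_ge_1; auto]. Qed.

Lemma profile_mid t : T (-1) <= t <= T 1 -> profile t = z * Q t.
Proof. intros. unfold profile. rewrite clamp_id; auto. apply rescale_bound; auto. Qed.

Lemma profile_deriv_out t : t <= T (-1) \/ T 1 <= t -> profile_deriv t = 0.
Proof.
  intros. unfold profile_deriv.
  destruct (Rlt_dec _ t); [destruct (Rlt_dec t _)|]; auto; lra.
Qed.

Lemma profile_deriv_mid t : T (-1) < t < T 1 -> profile_deriv t = z * (phiz (Q t) / e).
Proof. intros. unfold profile_deriv. destruct (Rlt_dec _ t); [destruct (Rlt_dec t _)|]; auto; lra. Qed.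

Lemma continuous_profile t : continuous profile t.
Proof.
  unfold profile. apply continuous_Rmult; [apply continuous_const|].
  apply (continuous_comp Q clamp); [apply continuous_rescale, Hok| apply continuous_clamp].
Qed.

Lemma continuous_profile_deriv_mid t : continuous (fun t => z * (phiz (Q t) / e)) t.
Proof.
  apply continuous_Rmult; [apply continuous_const|]. apply continuous_Rdiv_const.
  apply (continuous_comp Q phiz); [apply continuous_rescale, Hok| eapply continuous_phi, Hok].
Qed.

Lemma FTC_on_profile c d : c <= T (-1) -> T 1 <= d -> FTC_on profile profile_deriv c d.
Proof.
  intros Hc Hd. pose proof (rescale_inv_layer _ _ _ s Hok) as (L1 & _ & _).
  apply FTC_on_glue with (T (-1)).
  { apply (FTC_on_ext _ _ (fun _ => - z) (fun _ => 0)); [| |apply FTC_on_const]; intros t Ht;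
      [apply profile_left| apply profile_deriv_out]; lra. }
  apply FTC_on_glue with (T 1).
  { apply (FTC_on_ext _ _ (fun t => z * Q t) (fun t => z * (phiz (Q t) / e)));
      [intros; apply profile_mid; lra| intros; apply profile_deriv_mid; lra|].
    apply FTC_on_scal, FTC_on_rescale, Hok. }
  apply (FTC_on_ext _ _ (fun _ => z) (fun _ => 0)); [| |apply FTC_on_const]; intros t Ht;
    [apply profile_right| apply profile_deriv_out]; lra.
Qed.

Lemma profile_abs_le_1 t : (z = 1 \/ z = -1) -> Rabs (profile t) <= 1.
Proof.
  intros Hz. unfold profile. pose proof (clamp_bound (Q t)). apply Rabs_le.
  set (q := clamp (Q t)) in *. destruct Hz as [E|E]; rewrite E; lra.
Qed.

Variables al be lam : R.

Definition competitor (t : R) : R := profile t + lam * bump al be t.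
Definition competitor_deriv (t : R) : R := profile_deriv t + lam * bump_deriv al be t.

Lemma continuous_competitor t : continuous competitor t.
Proof.
  unfold competitor. apply continuous_Rplus; [apply continuous_profile|].
  apply continuous_Rmult; [apply continuous_const| apply continuous_bump].
Qed.

Lemma FTC_on_competitor c d : c <= T (-1) -> T 1 <= d -> c <= al -> be <= d -> al < be ->
  FTC_on competitor competitor_deriv c d.
Proof.
  intros. apply FTC_on_plus; [apply FTC_on_profile; auto|].
  apply FTC_on_scal, FTC_on_bump; auto.
Qed.

(* The derivative is continuous except at the two ends of the transition layer. *)
Lemma ex_RInt_comp_competitor_deriv (k : R -> R) c d : c <= T (-1) -> T 1 <= d ->
  (forall r, continuous k r) -> ex_RInt (fun t => k (competitor_deriv t)) c d.
Proof.
  intros Hc Hd Hk. pose proof (rescale_inv_layer _ _ _ s Hok) as (L1 & _ & _).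
  assert (Cb : forall t, continuous (fun t => k (lam * bump_deriv al be t)) t).
  { intros. apply (continuous_comp (fun t => lam * bump_deriv al be t) k); auto.
    apply continuous_Rmult; [apply continuous_const| apply continuous_bump_deriv]. }
  assert (Hout : forall a b, (b <= T (-1) \/ T 1 <= a) -> a <= b ->
      ex_RInt (fun t => k (competitor_deriv t)) a b).
  { intros a b Hab Hab'. apply (ex_RInt_ext_le _ (fun t => k (lam * bump_deriv al be t))); auto.
    - intros t Ht. unfold competitor_deriv. rewrite profile_deriv_out by lra. f_equal. ring.
    - apply ex_RInt_continuous_le; auto. }
  apply (ex_RInt_Chasles _ c (T (-1)) d); [apply Hout; lra|].
  apply (ex_RInt_Chasles _ (T (-1)) (T 1) d); [|apply Hout; lra].
  apply (ex_RInt_ext_le _ (fun t => k (z * (phiz (Q t) / e) + lam * bump_deriv al be t))); [lra| |].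
  - intros t Ht. unfold competitor_deriv. rewrite profile_deriv_mid by lra. reflexivity.
  - apply ex_RInt_continuous_le; [lra|]. intros.
    apply (continuous_comp (fun t => z * (phiz (Q t) / e) + lam * bump_deriv al be t) k); auto.
    apply continuous_Rplus; [apply continuous_profile_deriv_mid|].
    apply continuous_Rmult; [apply continuous_const| apply continuous_bump_deriv].
Qed.

End Competitor.

Lemma RInt_ext_but_one (f g : R -> R) a p b : a <= p <= b ->
  (forall t, a < t < b -> t <> p -> f t = g t) -> ex_RInt g a b ->
  ex_RInt f a b /\ RInt f a b = RInt g a b.
Proof.
  intros Hp H E.
  destruct (RInt_piecewise f g g a p b Hp) as [Ef ->]; try (intros; apply H; lra);
    [apply (ex_RInt_Chasles_1 g a p b)| apply (ex_RInt_Chasles_2 g a p b)|]; auto.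
  split; auto. symmetry. apply RInt_Chasles_R;
    [apply (ex_RInt_Chasles_1 g a p b)| apply (ex_RInt_Chasles_2 g a p b)]; auto.
Qed.

Lemma Lint_zero_but_one (f : R -> R) a p b : a <= p <= b ->
  (forall t, a < t < b -> t <> p -> f t = 0) -> Lint f a b 0.
Proof.
  intros Hp H.
  destruct (RInt_ext_but_one f (fun _ => 0) a p b Hp H (ex_RInt_const _ _ _)) as [Ef E].
  pose proof (Lint_RInt f a b ltac:(lra) Ef) as HL. rewrite E, RInt_Rconst, Rmult_0_l in HL. exact HL.
Qed.

Definition recovery_sequence (C0 : R) (W : R -> R) (sigma : R) (y u : R -> R) (c d s : R) : Prop :=
  exists eps0, 0 < eps0 /\ exists U G : R -> R -> R,
    (forall e, 0 < e < eps0 ->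
       W12 c d (U e) (G e) /\
       (exists c' d', c < c' /\ c' <= d' /\ d' < d /\
          forall t, c < t < d -> (t < c' \/ d' < t) -> U e t = u t) /\
       (forall t, c < t < d -> Rabs (U e t) <= C0) /\
       (exists I, Lint (fun t => U e t * y t) c d I /\
                  Lint (fun t => u t * y t) c d I)) /\
    (forall eta, 0 < eta -> exists del, 0 < del /\ forall e, 0 < e < del -> e < eps0 ->
       exists I, Lint (fun t => Rabs (U e t - u t)) c d I /\ I < eta) /\
    (forall eta, 0 < eta -> exists del, 0 < del /\ forall e, 0 < e < del -> e < eps0 ->
       exists E, Lint (fun t => (e * G e t ^ 2 + W (U e t) / e) * y t) c d E /\
                 2 * PI * E <= 2 * PI * sigma * y s + eta).

Lemma recovery_sequence_const C0 W sigma (y u : R -> R) c d s z m0 :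
  1 < C0 -> c < m0 < d -> (z = 1 \/ z = -1) -> W z = 0 -> 0 <= sigma -> 0 < y s ->
  (forall t, c <= t <= d -> continuous y t) -> (forall t, c < t < d -> t <> m0 -> u t = z) ->
  recovery_sequence C0 W sigma y u c d s.
Proof.
  intros HC0 Hm Hz HWz Hsig Hys Hy Hu.
  assert (Ey : ex_RInt y c d) by (apply ex_RInt_continuous_le; auto; lra).
  exists 1. split; [lra|]. exists (fun _ _ => z), (fun _ _ => 0).
  split; [intros e He; split; [|split; [|split]]| split].
  - apply W12_of_FTC_on; try apply ex_RInt_const; [lra| apply FTC_on_const].
  - exists m0, m0. repeat split; try lra. intros t Ht Ho. symmetry. apply Hu; lra.
  - intros t _. destruct Hz; subst z; rewrite ?Rabs_R1, ?Rabs_m1; lra.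
  - destruct (RInt_ext_but_one (fun t => u t * y t) (fun t => z * y t) c m0 d) as [E1 E2];
      [lra| intros; rewrite Hu; auto| apply ex_RInt_Rscal, Ey|].
    exists (RInt (fun t => z * y t) c d). rewrite <- E2 at 2.
    split; apply Lint_RInt; auto; try lra. apply ex_RInt_Rscal, Ey.
  - intros eta Heta. exists 1. split; [lra|]. intros e _ _. exists 0. split; [|auto].
    apply (Lint_zero_but_one _ c m0 d); [lra|]. intros. rewrite Hu, Rminus_diag, Rabs_R0; auto.
  - intros eta Heta. exists 1. split; [lra|]. intros e He _. exists 0. split.
    + apply (Lint_zero_but_one _ c m0 d); [lra|]. intros. rewrite HWz. unfold Rdiv. ring.
    + pose proof PI_RGT_0. assert (0 <= sigma * y s) by (apply Rmult_le_pos; lra). nra.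
Qed.

(** * Construction at a jump *)

Lemma pow_le_base v n : 0 <= v <= 1 -> (1 <= n)%nat -> v ^ n <= v.
Proof.
  intros Hv Hn. induction n as [|n IH]; [lia|].
  destruct n as [|n]; [simpl; lra|].
  assert (v ^ S n <= v) by (apply IH; lia).
  change (v ^ S (S n)) with (v * v ^ S n). pose proof (pow_le v (S n) (proj1 Hv)). nra.
Qed.

Definition nu_of (e : R) : R := sqrt (sqrt e).

Lemma nu_of_spec d0 e : 0 < d0 -> 0 < e < d0 ^ 4 -> 0 < nu_of e < d0 /\ nu_of e ^ 4 = e.
Proof.
  intros Hd He. unfold nu_of.
  assert (E4 : sqrt (sqrt e) ^ 4 = e).
  { change 4%nat with (2 * 2)%nat. rewrite pow_mult, !pow2_sqrt; [lra| lra| apply sqrt_pos]. }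
  assert (P : 0 < sqrt (sqrt e)) by (apply sqrt_lt_R0, sqrt_lt_R0; lra).
  split; [split|]; auto.
  apply Rnot_le_lt. intro Hle. assert (d0 ^ 4 <= sqrt (sqrt e) ^ 4) by (apply pow_incr; lra). lra.
Qed.

Lemma nu_of_small eta K : 0 < eta -> 0 <= K ->
  exists del, 0 < del /\ forall e, 0 < e < del -> nu_of e * K < eta.
Proof.
  intros Heta HK. assert (Hd : 0 < eta / (K + 1)) by (apply Rdiv_lt_0_compat; lra).
  exists ((eta / (K + 1)) ^ 4). split; [apply pow_lt; lra|].
  intros e He. destruct (nu_of_spec _ e Hd He) as [[H1 H2] _].
  apply Rle_lt_trans with (eta / (K + 1) * K); [apply Rmult_le_compat_r; lra|].
  apply Rmult_lt_reg_r with (K + 1); [lra|]. field_simplify; nra.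
Qed.

Lemma energy_error_le ys sigma L Ymax K2 Kl Bb Bd w v lam :
  0 < v <= 1 -> 0 <= ys -> 0 <= sigma -> 0 <= L -> 0 <= Ymax -> 0 <= K2 -> 0 <= w ->
  Rabs lam <= Kl * v ^ 3 ->
  (ys + L * v ^ 3) * (sigma + 4 * v)
  + Ymax * (v ^ 4 * lam ^ 2 * Bd ^ 2 + K2 * (lam * Bb) ^ 2 / v ^ 4) * w
  <= ys * sigma + v * (4 * ys + L * sigma + 4 * L + Ymax * w * (Kl ^ 2 * Bd ^ 2 + K2 * Kl ^ 2 * Bb ^ 2)).
Proof.
  intros Hv Hys Hsig HL HY HK2 Hw Hlam.
  assert (P3 : v ^ 3 <= v) by (apply pow_le_base; [lra| lia]).
  assert (P4 : v ^ 4 <= v) by (apply pow_le_base; [lra| lia]).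
  assert (Hl2 : lam ^ 2 <= Kl ^ 2 * v ^ 6).
  { rewrite <- (pow2_abs lam). replace (Kl ^ 2 * v ^ 6) with ((Kl * v ^ 3) ^ 2) by ring.
    apply pow_incr. split; [apply Rabs_pos| auto]. }
  assert (T1 : (ys + L * v ^ 3) * (sigma + 4 * v) <= ys * sigma + v * (4 * ys + L * sigma + 4 * L)).
  { assert (L * v ^ 3 * sigma <= L * v * sigma)
      by (apply Rmult_le_compat_r; auto; apply Rmult_le_compat_l; auto).
    assert (L * v ^ 3 * v <= L * v)
      by (replace (L * v ^ 3 * v) with (L * v ^ 4) by ring; apply Rmult_le_compat_l; auto).
    nra. }
  assert (T2a : v ^ 4 * lam ^ 2 * Bd ^ 2 <= Kl ^ 2 * Bd ^ 2 * v).
  { apply Rle_trans with (v ^ 4 * (Kl ^ 2 * v ^ 6) * Bd ^ 2).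
    - apply Rmult_le_compat_r; [apply pow2_ge_0|]. apply Rmult_le_compat_l; [apply pow_le; lra| auto].
    - replace (v ^ 4 * (Kl ^ 2 * v ^ 6) * Bd ^ 2) with (Kl ^ 2 * Bd ^ 2 * v ^ 10) by ring.
      apply Rmult_le_compat_l; [apply Rmult_le_pos; apply pow2_ge_0|]. apply pow_le_base; [lra| lia]. }
  assert (T2b : K2 * (lam * Bb) ^ 2 / v ^ 4 <= K2 * Kl ^ 2 * Bb ^ 2 * v).
  { assert (Hv4 : 0 < v ^ 4) by (apply pow_lt; lra).
    replace (K2 * (lam * Bb) ^ 2 / v ^ 4) with (K2 * Bb ^ 2 * (lam ^ 2 / v ^ 4)) by (field; lra).
    replace (K2 * Kl ^ 2 * Bb ^ 2 * v) with (K2 * Bb ^ 2 * (Kl ^ 2 * v)) by ring.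
    apply Rmult_le_compat_l; [apply Rmult_le_pos; [auto| apply pow2_ge_0]|].
    apply Rmult_le_reg_r with (v ^ 4); auto. unfold Rdiv. rewrite Rmult_assoc, Rinv_l, Rmult_1_r by lra.
    replace (Kl ^ 2 * v * v ^ 4) with (Kl ^ 2 * v ^ 5) by ring.
    apply Rle_trans with (1 := Hl2). apply Rmult_le_compat_l; [apply pow2_ge_0|].
    replace (v ^ 6) with (v ^ 5 * v) by ring. pose proof (pow_le v 5 ltac:(lra)). nra. }
  assert (T2 : Ymax * (v ^ 4 * lam ^ 2 * Bd ^ 2 + K2 * (lam * Bb) ^ 2 / v ^ 4) * w <=
               v * (Ymax * w * (Kl ^ 2 * Bd ^ 2 + K2 * Kl ^ 2 * Bb ^ 2))).
  { replace (v * (Ymax * w * (Kl ^ 2 * Bd ^ 2 + K2 * Kl ^ 2 * Bb ^ 2))) with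
      (Ymax * (Kl ^ 2 * Bd ^ 2 * v + K2 * Kl ^ 2 * Bb ^ 2 * v) * w) by ring.
    apply Rmult_le_compat_r; [lra|]. apply Rmult_le_compat_l; lra. }
  lra.
Qed.

Section JumpCase.

Variables (C0 sigma : R) (W y u : R -> R) (c d s z L Ymax rho K2 : R).
Hypothesis HC0 : 1 < C0.
Hypothesis HW : W_ok W.
Hypothesis Hz : z = 1 \/ z = -1.
Hypothesis Hsig : RInt (fun r => sqrt (W_oriented W z r)) (-1) 1 = sigma / 2.
Hypothesis Hsig0 : 0 <= sigma.
Hypothesis Hs : c < s < d.
Hypothesis Hy : forall t, c <= t <= d -> continuous y t.
Hypothesis Hyp : forall t, c <= t <= d -> 0 < y t.
Hypothesis HyM : forall t, c <= t <= d -> y t <= Ymax.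
Hypothesis HL : 0 <= L.
Hypothesis Hlip : forall t, c <= t <= d -> y t <= y s + L * Rabs (t - s).
Hypothesis Hu : forall t, c < t < d -> Rabs (u t) <= 1.
Hypothesis Hul : forall t, c < t < s -> u t = - z.
Hypothesis Hur : forall t, s < t < d -> u t = z.
Hypothesis Hrho : 0 < rho.
Hypothesis HK2 : 0 <= K2.
Hypothesis Htay : forall h, Rabs h <= rho -> W (z + h) <= K2 * h ^ 2.

Local Notation T nu e := (rescale_inv (W_oriented W z) nu e s).

Lemma ex_RInt_u_mul (g : R -> R) : (forall t, c <= t <= d -> continuous g t) ->
  ex_RInt (fun t => u t * g t) c d.
Proof.
  intros Hg.
  assert (Ek : forall k a b, c <= a -> a <= b -> b <= d -> ex_RInt (fun t => k * g t) a b).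
  { intros k a b Ha Hab Hb. apply ex_RInt_continuous_le; auto. intros.
    apply continuous_Rmult; [apply continuous_const| apply Hg; lra]. }
  apply (RInt_piecewise _ (fun t => - z * g t) (fun t => z * g t) c s d); try (apply Ek; lra); [lra| |];
    intros t Ht; [rewrite Hul| rewrite Hur]; auto; lra.
Qed.

Lemma ex_RInt_u : ex_RInt u c d.
Proof.
  apply (ex_RInt_ext (fun t => u t * 1)); [intros; apply Rmult_1_r|].
  apply ex_RInt_u_mul. intros; apply continuous_const.
Qed.

Lemma profile_mass_defect nu e : 0 < nu -> 0 < e -> c <= T nu e (-1) -> T nu e 1 <= d ->
  Rabs (RInt (fun t => profile W z nu e s t * y t) c d - RInt (fun t => u t * y t) c d)
    <= 2 * Ymax * (T nu e 1 - T nu e (-1)).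
Proof.
  intros Hnu He H1 H2. pose proof (profile_ok_W_oriented W z nu e HW Hnu He) as Hok.
  pose proof (rescale_inv_layer _ _ _ s Hok) as (L1 & _ & _).
  assert (Ep : ex_RInt (fun t => profile W z nu e s t * y t) c d).
  { apply ex_RInt_continuous_le; [lra|]. intros.
    apply continuous_Rmult; [apply continuous_profile, Hok| apply Hy; auto]. }
  assert (Eu : ex_RInt (fun t => u t * y t) c d) by (apply ex_RInt_u_mul; auto).
  rewrite <- RInt_Rminus by auto.
  rewrite (RInt_supported _ c (T nu e (-1)) (T nu e 1) d); try lra; auto using ex_RInt_Rminus;
    [| intros; rewrite (profile_left _ _ _ _ _ Hok), Hul by lra; ring
     | intros; rewrite (profile_right _ _ _ _ _ Hok), Hur by lra; ring].
  apply RInt_abs_le_const; [lra| apply (ex_RInt_sub _ c _ _ d); auto using ex_RInt_Rminus; lra|].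
  intros t Ht. rewrite <- Rmult_minus_distr_r, Rabs_mult.
  pose proof (Hyp t ltac:(lra)). pose proof (HyM t ltac:(lra)). rewrite (Rabs_right (y t)) by lra.
  pose proof (profile_abs_le_1 W z nu e s t Hz). pose proof (Hu t ltac:(lra)).
  pose proof (Rabs_triang (profile W z nu e s t) (- u t)) as Htr. rewrite Rabs_Ropp in Htr.
  unfold Rminus. apply Rmult_le_compat; try apply Rabs_pos; lra.
Qed.

Lemma competitor_L1_le nu e al be lam : 0 < nu -> 0 < e ->
  c <= T nu e (-1) -> T nu e 1 <= al -> al < be -> be <= d ->
  ex_RInt (fun t => Rabs (competitor W z nu e s al be lam t - u t)) c d /\
  RInt (fun t => Rabs (competitor W z nu e s al be lam t - u t)) c d <=
    2 * (T nu e 1 - T nu e (-1)) + Rabs lam * ((be - al) ^ 2 / 4) ^ 2 * (be - al).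
Proof.
  intros Hnu He H1 H2 H3 H4. pose proof (profile_ok_W_oriented W z nu e HW Hnu He) as Hok.
  pose proof (rescale_inv_layer _ _ _ s Hok) as (L1 & _ & _).
  set (P := fun t => Rabs (profile W z nu e s t - u t)).
  set (B := fun t => Rabs lam * bump al be t).
  assert (Ex : forall f : R -> R, (forall t, continuous f t) -> ex_RInt (fun t => Rabs (f t - u t)) c d).
  { intros f Hf. apply (ex_RInt_norm (fun t => f t - u t)), ex_RInt_Rminus; [|apply ex_RInt_u].
    apply ex_RInt_continuous_le; auto; lra. }
  assert (EP : ex_RInt P c d) by (apply Ex, continuous_profile, Hok).
  assert (EB : ex_RInt B c d).
  { apply ex_RInt_Rscal, ex_RInt_continuous_le; [lra|]. intros; apply continuous_bump. }
  split; [apply Ex, continuous_competitor, Hok|].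
  apply Rle_trans with (RInt (fun t => P t + B t) c d).
  { apply RInt_le; [lra| apply Ex, continuous_competitor, Hok| apply ex_RInt_Rplus; auto|].
    intros t _. unfold P, B, competitor.
    pose proof (Rabs_triang (profile W z nu e s t - u t) (lam * bump al be t)) as Htr.
    rewrite Rabs_mult, (Rabs_right (bump al be t)) in Htr by apply Rle_ge, (bump_bound al be H3).
    replace (profile W z nu e s t + lam * bump al be t - u t)
      with (profile W z nu e s t - u t + lam * bump al be t) by ring. exact Htr. }
  rewrite RInt_Rplus by auto. apply Rplus_le_compat.
  - rewrite (RInt_supported P c (T nu e (-1)) (T nu e 1) d); auto; try lra;
      [| intros; unfold P; rewrite (profile_left _ _ _ _ _ Hok), Hul, Rminus_diag, Rabs_R0 by lra; auto
       | intros; unfold P; rewrite (profile_right _ _ _ _ _ Hok), Hur, Rminus_diag, Rabs_R0 by lra; auto].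
    apply RInt_le_const; [lra| apply (ex_RInt_sub _ c _ _ d); auto; lra|].
    intros t Ht. unfold P. pose proof (profile_abs_le_1 W z nu e s t Hz). pose proof (Hu t ltac:(lra)).
    pose proof (Rabs_triang (profile W z nu e s t) (- u t)) as Htr. rewrite Rabs_Ropp in Htr.
    unfold Rminus. lra.
  - rewrite (RInt_supported B c al be d); auto; try lra;
      [| intros; unfold B; rewrite (proj1 (bump_out al be H3 t ltac:(lra))); ring
       | intros; unfold B; rewrite (proj1 (bump_out al be H3 t ltac:(lra))); ring].
    assert (Eb : ex_RInt (bump al be) al be)
      by (apply ex_RInt_continuous_le; [lra| intros; apply continuous_bump]).
    rewrite Rmult_assoc. unfold B. rewrite RInt_Rscal by exact Eb.
    apply Rmult_le_compat_l; [apply Rabs_pos|].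
    apply RInt_le_const; [lra| exact Eb|].
    intros t _. apply (bump_bound al be H3).
Qed.

Lemma layer_energy_weighted_le nu e : 0 < nu -> 0 < e -> c <= T nu e (-1) -> T nu e 1 <= d ->
  let Ly t := layer_density (W_oriented W z) nu e (rescale (W_oriented W z) nu e s t) * y t in
  ex_RInt Ly (T nu e (-1)) (T nu e 1) /\
  RInt Ly (T nu e (-1)) (T nu e 1) <= (y s + L * (e / nu)) * (sigma + 4 * nu).
Proof.
  intros Hnu He H1 H2 Ly. pose proof (profile_ok_W_oriented W z nu e HW Hnu He) as Hok.
  pose proof (rescale_inv_layer _ _ _ s Hok) as (L1 & L2 & L3).
  destruct (layer_energy_le _ _ _ s Hok) as [EL HLe]. rewrite Hsig in HLe.
  assert (ELy : ex_RInt Ly (T nu e (-1)) (T nu e 1)).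
  { apply ex_RInt_continuous_le; [lra|]. intros t Ht. apply continuous_Rmult; [|apply Hy; lra].
    apply (continuous_comp (rescale _ _ _ _)); [apply continuous_rescale, Hok| apply continuous_layer_density, Hok]. }
  split; auto.
  assert (Hys : 0 < y s) by (apply Hyp; lra).
  assert (0 <= L * (e / nu)) by (apply Rmult_le_pos; [lra| apply Rlt_le, Rdiv_lt_0_compat; lra]).
  apply Rle_trans with (RInt (fun t => (y s + L * (e / nu)) *
      layer_density (W_oriented W z) nu e (rescale (W_oriented W z) nu e s t)) (T nu e (-1)) (T nu e 1)).
  - apply RInt_le; [lra| auto| apply ex_RInt_Rscal; auto|].
    intros t Ht. unfold Ly. rewrite Rmult_comm.
    apply Rmult_le_compat_r; [apply layer_density_ge0, Hok|].
    apply Rle_trans with (y s + L * Rabs (t - s)); [apply Hlip; lra|].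
    apply Rplus_le_compat_l, Rmult_le_compat_l; auto. apply Rabs_le. lra.
  - rewrite RInt_Rscal by auto. apply Rmult_le_compat_l; lra.
Qed.

Definition bump_energy (e al be lam t : R) : R :=
  (e * (lam * bump_deriv al be t) ^ 2 + W (z + lam * bump al be t) / e) * y t.

Lemma continuous_bump_energy e al be lam t : c <= t <= d -> continuous (bump_energy e al be lam) t.
Proof.
  intros Ht. unfold bump_energy. apply continuous_Rmult; [|apply Hy; auto]. apply continuous_Rplus.
  - solve_continuous. apply continuous_bump_deriv.
  - apply continuous_Rdiv_const, (continuous_comp (fun t => z + lam * bump al be t) W);
      [solve_continuous; apply continuous_bump| apply continuous_W, HW].
Qed.

Lemma bump_energy_density_le e lam b db Bb Bd : 0 < e -> 0 <= b <= Bb -> Rabs db <= Bd ->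
  Rabs lam * Bb <= rho ->
  e * (lam * db) ^ 2 + W (z + lam * b) / e <= e * lam ^ 2 * Bd ^ 2 + K2 * (lam * Bb) ^ 2 / e.
Proof.
  intros He Hb Hdb Hlam.
  assert (HX : (lam * db) ^ 2 <= lam ^ 2 * Bd ^ 2).
  { rewrite Rpow_mult_distr. apply Rmult_le_compat_l; [apply pow2_ge_0|]. apply pow_maj_Rabs; auto. }
  assert (Hr : Rabs (lam * b) <= Rabs lam * Bb).
  { rewrite Rabs_mult, (Rabs_right b) by lra. apply Rmult_le_compat_l; [apply Rabs_pos| lra]. }
  assert (HW2 : W (z + lam * b) <= K2 * (lam * Bb) ^ 2).
  { apply Rle_trans with (K2 * (lam * b) ^ 2); [apply Htay; lra|].
    apply Rmult_le_compat_l; auto. rewrite <- (pow2_abs (lam * Bb)). apply pow_maj_Rabs.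
    rewrite (Rabs_mult lam Bb), (Rabs_right Bb) by lra. exact Hr. }
  rewrite Rmult_assoc. apply Rplus_le_compat; [apply Rmult_le_compat_l; lra|].
  apply Rmult_le_compat_r; [left; apply Rinv_0_lt_compat; lra| auto].
Qed.

Lemma bump_energy_le e al be lam p : 0 < e -> c <= p -> p <= al -> al < be -> be <= d ->
  Rabs lam * ((be - al) ^ 2 / 4) ^ 2 <= rho ->
  RInt (bump_energy e al be lam) p d <=
    Ymax * (e * lam ^ 2 * (2 * ((be - al) ^ 2 / 4) * (be - al)) ^ 2
            + K2 * (lam * ((be - al) ^ 2 / 4) ^ 2) ^ 2 / e) * (be - al).
Proof.
  intros He Hp1 Hp2 Hab Hbd Hlam. destruct (W_wells W z HW Hz) as [Wz0 _].
  assert (Hout : forall t, t <= al \/ be <= t -> bump_energy e al be lam t = 0).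
  { intros t Ht. unfold bump_energy. rewrite (proj1 (bump_out al be Hab t Ht)), (proj2 (bump_out al be Hab t Ht)).
    replace (z + lam * 0) with z by ring. rewrite Wz0. unfold Rdiv. ring. }
  rewrite (RInt_supported _ p al be d); try lra;
    [| apply ex_RInt_continuous_le; [lra| intros; apply continuous_bump_energy; lra]
     | intros; apply Hout; lra| intros; apply Hout; lra].
  apply RInt_le_const; [lra| apply ex_RInt_continuous_le; [lra| intros; apply continuous_bump_energy; lra]|].
  intros t Ht. unfold bump_energy. rewrite (Rmult_comm Ymax).
  pose proof (bump_bound al be Hab t) as Hb. pose proof (bump_deriv_bound al be Hab t) as Hdb.
  pose proof (bump_energy_density_le e lam _ _ _ _ He Hb Hdb Hlam).
  pose proof (Hyp t ltac:(lra)). pose proof (HyM t ltac:(lra)).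
  assert (0 <= e * (lam * bump_deriv al be t) ^ 2 + W (z + lam * bump al be t) / e).
  { pose proof (pow2_ge_0 (lam * bump_deriv al be t)). pose proof (proj1 (proj2 HW) (z + lam * bump al be t)).
    apply Rplus_le_le_0_compat; [apply Rmult_le_pos| apply Rmult_le_pos; [|left; apply Rinv_0_lt_compat]]; lra. }
  apply Rmult_le_compat; lra.
Qed.

(* Left of the layer the competitor sits in the well [-z], where the density vanishes. *)
Lemma competitor_energy_split nu e al be lam : 0 < nu -> 0 < e ->
  c <= T nu e (-1) -> T nu e 1 <= al -> al < be -> be <= d ->
  let F t := (e * competitor_deriv W z nu e s al be lam t ^ 2
              + W (competitor W z nu e s al be lam t) / e) * y t in
  let Ly t := layer_density (W_oriented W z) nu e (rescale (W_oriented W z) nu e s t) * y t in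
  ex_RInt F c d /\
  RInt F c d = RInt Ly (T nu e (-1)) (T nu e 1) + RInt (bump_energy e al be lam) (T nu e 1) d.
Proof.
  intros Hnu He H1 H2 H3 H4 F Ly. pose proof (profile_ok_W_oriented W z nu e HW Hnu He) as Hok.
  pose proof (rescale_inv_layer _ _ _ s Hok) as (L1 & _ & _).
  destruct (W_wells W z HW Hz) as [_ Wmz0].
  destruct (layer_energy_weighted_le nu e Hnu He) as [ELy _]; try lra.
  assert (FLy : forall t, T nu e (-1) < t < T nu e 1 -> F t = Ly t).
  { intros t Ht. unfold F, Ly, competitor, competitor_deriv, layer_density.
    rewrite profile_deriv_mid, (profile_mid _ _ _ _ _ Hok) by lra.
    rewrite (proj1 (bump_out al be H3 t ltac:(lra))), (proj2 (bump_out al be H3 t ltac:(lra))).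
    set (Q := rescale (W_oriented W z) nu e s).
    rewrite (clamp_id (Q t)) by (apply (rescale_bound _ _ _ _ Hok); lra).
    change (W_oriented W z (Q t)) with (W (z * Q t)).
    assert (Ez : z * z = 1) by (destruct Hz as [-> | ->]; ring).
    set (P := phi (W_oriented W z) nu (Q t)).
    replace (e * (z * (P / e) + lam * 0) ^ 2) with (z * z * P ^ 2 / e) by (field; lra).
    rewrite Ez, Rmult_0_r, Rplus_0_r. field. lra. }
  assert (FBt : forall t, T nu e 1 < t < d -> F t = bump_energy e al be lam t).
  { intros t Ht. unfold F, bump_energy, competitor, competitor_deriv.
    rewrite profile_deriv_out, (profile_right _ _ _ _ _ Hok) by lra. f_equal. f_equal. ring. }
  destruct (RInt_piecewise F Ly (bump_energy e al be lam) (T nu e (-1)) (T nu e 1) d) as [E1 R1];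
    [lra| exact FLy| exact FBt| exact ELy| apply ex_RInt_continuous_le; [lra| intros; apply continuous_bump_energy; lra]|].
  destruct (RInt_piecewise F (fun _ => 0) F c (T nu e (-1)) d) as [E2 ->];
    [lra| | reflexivity| apply ex_RInt_const| exact E1|].
  { intros t Ht. unfold F, competitor, competitor_deriv.
    rewrite profile_deriv_out, (profile_left _ _ _ _ _ Hok) by lra.
    rewrite (proj1 (bump_out al be H3 t ltac:(lra))), (proj2 (bump_out al be H3 t ltac:(lra))).
    replace (- z + lam * 0) with (- z) by ring. rewrite Wmz0. unfold Rdiv. ring. }
  split; auto. rewrite RInt_Rconst, Rmult_0_l, Rplus_0_l. exact R1.
Qed.

Lemma competitor_energy_le nu e al be lam : 0 < nu -> 0 < e ->
  c <= T nu e (-1) -> T nu e 1 <= al -> al < be -> be <= d ->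
  Rabs lam * ((be - al) ^ 2 / 4) ^ 2 <= rho ->
  let F t := (e * competitor_deriv W z nu e s al be lam t ^ 2
              + W (competitor W z nu e s al be lam t) / e) * y t in
  ex_RInt F c d /\
  RInt F c d <= (y s + L * (e / nu)) * (sigma + 4 * nu) +
    Ymax * (e * lam ^ 2 * (2 * ((be - al) ^ 2 / 4) * (be - al)) ^ 2
            + K2 * (lam * ((be - al) ^ 2 / 4) ^ 2) ^ 2 / e) * (be - al).
Proof.
  intros Hnu He H1 H2 H3 H4 Hlam. cbv zeta.
  pose proof (competitor_energy_split nu e al be lam Hnu He H1 H2 H3 H4) as HS. cbv zeta in HS.
  destruct HS as [EF ->]. split; auto. apply Rplus_le_compat.
  - apply layer_energy_weighted_le; auto; lra.
  - apply bump_energy_le; auto. pose proof (rescale_inv_layer _ _ _ s (profile_ok_W_oriented W z nu e HW Hnu He)). lra.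
Qed.

Definition bump_left : R := s + (d - s) / 3.
Definition bump_right : R := s + 2 * (d - s) / 3.
Definition bump_max : R := ((bump_right - bump_left) ^ 2 / 4) ^ 2.
Definition bump_mass : R := RInt (fun t => bump bump_left bump_right t * y t) c d.
Definition lam_coef : R := 4 * Ymax / bump_mass.

Definition mass_correction (e : R) : R :=
  - (RInt (fun t => profile W z (nu_of e) e s t * y t) c d - RInt (fun t => u t * y t) c d) / bump_mass.

Definition nu_max : R :=
  Rmin 1 (Rmin ((s - c) / 2) (Rmin ((bump_left - s) / 2)
    (Rmin ((C0 - 1) / (lam_coef * bump_max + 1)) (rho / (lam_coef * bump_max + 1))))).

Definition recovery_U (e : R) : R -> R :=
  competitor W z (nu_of e) e s bump_left bump_right (mass_correction e).
Definition recovery_G (e : R) : R -> R :=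
  competitor_deriv W z (nu_of e) e s bump_left bump_right (mass_correction e).

Lemma bump_window : s < bump_left < bump_right /\ bump_right < d.
Proof. unfold bump_left, bump_right. lra. Qed.

Lemma bump_mass_pos : 0 < bump_mass.
Proof.
  pose proof bump_window. unfold bump_mass.
  apply (RInt_bump_mul_pos bump_left bump_right); auto; lra.
Qed.

Lemma lam_coef_pos : 0 < lam_coef.
Proof.
  pose proof bump_mass_pos. pose proof (Hyp s ltac:(lra)). pose proof (HyM s ltac:(lra)).
  unfold lam_coef. apply Rdiv_lt_0_compat; lra.
Qed.

Lemma bump_max_pos : 0 < bump_max.
Proof. pose proof bump_window. unfold bump_max. apply pow_lt, Rdiv_lt_0_compat; [apply pow_lt|]; lra. Qed.

Lemma nu_max_spec : 0 < nu_max /\ nu_max <= 1 /\ nu_max <= (s - c) / 2 /\ nu_max <= (bump_left - s) / 2 /\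
  (lam_coef * bump_max + 1) * nu_max <= C0 - 1 /\ (lam_coef * bump_max + 1) * nu_max <= rho.
Proof.
  pose proof bump_window. pose proof lam_coef_pos. pose proof bump_max_pos.
  assert (HK : 0 < lam_coef * bump_max + 1) by nra.
  assert (Hmin : forall a b, 0 < a -> 0 < b -> 0 < Rmin a b /\ Rmin a b <= a /\ Rmin a b <= b)
    by (intros; split; [apply Rmin_glb_lt| split; [apply Rmin_l| apply Rmin_r]]; auto).
  assert (Hdiv : forall a, 0 < a -> (lam_coef * bump_max + 1) * (a / (lam_coef * bump_max + 1)) = a)
    by (intros; field; lra).
  unfold nu_max.
  destruct (Hmin ((C0 - 1) / (lam_coef * bump_max + 1)) (rho / (lam_coef * bump_max + 1)))
    as (P4 & A4 & B4); try (apply Rdiv_lt_0_compat; lra).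
  destruct (Hmin ((bump_left - s) / 2) _ ltac:(lra) P4) as (P3 & A3 & B3).
  destruct (Hmin ((s - c) / 2) _ ltac:(lra) P3) as (P2 & A2 & B2).
  destruct (Hmin 1 _ ltac:(lra) P2) as (P1 & A1 & B1).
  repeat split; try lra.
  - rewrite <- (Hdiv (C0 - 1)) at 2 by lra. apply Rmult_le_compat_l; lra.
  - rewrite <- (Hdiv rho) at 2 by lra. apply Rmult_le_compat_l; lra.
Qed.

Lemma layer_inside e : 0 < e < nu_max ^ 4 ->
  0 < nu_of e < nu_max /\ nu_of e ^ 4 = e /\
  c < T (nu_of e) e (-1) /\ T (nu_of e) e 1 < bump_left /\
  T (nu_of e) e 1 - T (nu_of e) e (-1) <= 2 * nu_of e ^ 3.
Proof.
  intros He. pose proof nu_max_spec as (N0 & N1 & N2 & N3 & _).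
  destruct (nu_of_spec nu_max e N0 He) as [[V1 V2] V3].
  pose proof (profile_ok_W_oriented W z (nu_of e) e HW V1 ltac:(lra)) as Hok.
  pose proof (rescale_inv_layer _ _ _ s Hok) as (_ & B2 & B3).
  assert (Env : e / nu_of e = nu_of e ^ 3) by (rewrite <- V3 at 1; field; lra).
  assert (nu_of e ^ 3 <= nu_of e) by (apply pow_le_base; [lra| lia]).
  rewrite Env in B2, B3. repeat split; auto; lra.
Qed.

Lemma mass_correction_le e : 0 < e < nu_max ^ 4 -> Rabs (mass_correction e) <= lam_coef * nu_of e ^ 3.
Proof.
  intros He. destruct (layer_inside e He) as ([V1 _] & _ & Q1 & Q2 & Q3).
  pose proof bump_window. pose proof bump_mass_pos.
  unfold mass_correction, lam_coef, Rdiv.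
  rewrite Rabs_mult, Rabs_Ropp, Rabs_inv, (Rabs_right bump_mass) by lra.
  pose proof (profile_mass_defect (nu_of e) e V1 ltac:(lra) ltac:(lra) ltac:(lra)) as HA.
  apply Rle_trans with (2 * Ymax * (2 * nu_of e ^ 3) * / bump_mass).
  - apply Rmult_le_compat_r; [left; apply Rinv_0_lt_compat; lra|].
    eapply Rle_trans; [exact HA|]. apply Rmult_le_compat_l; [|lra].
    pose proof (Hyp s ltac:(lra)). pose proof (HyM s ltac:(lra)). lra.
  - right. field. lra.
Qed.

Lemma mass_correction_small e : 0 < e < nu_max ^ 4 ->
  Rabs (mass_correction e) * bump_max <= (lam_coef * bump_max + 1) * nu_max.
Proof.
  intros He. destruct (layer_inside e He) as ([V1 V2] & _). pose proof (mass_correction_le e He).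
  pose proof lam_coef_pos. pose proof bump_max_pos. pose proof nu_max_spec as (_ & N1 & _).
  assert (nu_of e ^ 3 <= nu_of e) by (apply pow_le_base; [lra| lia]).
  apply Rle_trans with (lam_coef * nu_max * bump_max); [|nra].
  apply Rmult_le_compat_r; [lra|]. eapply Rle_trans; [eassumption|]. apply Rmult_le_compat_l; lra.
Qed.

Lemma recovery_mass e : 0 < e < nu_max ^ 4 ->
  RInt (fun t => recovery_U e t * y t) c d = RInt (fun t => u t * y t) c d.
Proof.
  intros He. destruct (layer_inside e He) as ([V1 _] & _).
  pose proof (profile_ok_W_oriented W z (nu_of e) e HW V1 ltac:(lra)) as Hok.
  pose proof bump_mass_pos.
  assert (Ep : ex_RInt (fun t => profile W z (nu_of e) e s t * y t) c d).
  { apply ex_RInt_continuous_le; [lra|]. intros. apply continuous_Rmult; [apply continuous_profile, Hok| apply Hy; auto]. }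
  assert (Eb : ex_RInt (fun t => bump bump_left bump_right t * y t) c d).
  { apply ex_RInt_continuous_le; [lra|]. intros. apply continuous_Rmult; [apply continuous_bump| apply Hy; auto]. }
  unfold recovery_U, competitor.
  rewrite (RInt_ext_le _ (fun t => profile W z (nu_of e) e s t * y t
                                   + mass_correction e * (bump bump_left bump_right t * y t)))
    by (lra || (intros; ring)).
  rewrite RInt_Rplus, RInt_Rscal by auto using ex_RInt_Rscal. fold bump_mass.
  unfold mass_correction, Rdiv. rewrite Rmult_assoc, Rinv_l by lra. lra.
Qed.

Lemma recovery_admissible e : 0 < e < nu_max ^ 4 ->
  W12 c d (recovery_U e) (recovery_G e) /\
  (exists c' d', c < c' /\ c' <= d' /\ d' < d /\
     forall t, c < t < d -> (t < c' \/ d' < t) -> recovery_U e t = u t) /\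
  (forall t, c < t < d -> Rabs (recovery_U e t) <= C0) /\
  (exists I, Lint (fun t => recovery_U e t * y t) c d I /\ Lint (fun t => u t * y t) c d I).
Proof.
  intros He. destruct (layer_inside e He) as ([V1 _] & _ & Q1 & Q2 & _).
  pose proof (profile_ok_W_oriented W z (nu_of e) e HW V1 ltac:(lra)) as Hok.
  pose proof (rescale_inv_layer _ _ _ s Hok) as (L1 & _ & _).
  pose proof bump_window as Hw. pose proof nu_max_spec as (_ & _ & _ & _ & N4 & _).
  pose proof (mass_correction_small e He).
  set (lam := mass_correction e) in *. unfold recovery_U, recovery_G. fold lam.
  assert (EU : forall k : R -> R, (forall r, continuous k r) ->
      ex_RInt (fun t => k (competitor W z (nu_of e) e s bump_left bump_right lam t)) c d).
  { intros k Hk. apply ex_RInt_continuous_le; [lra|]. intros.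
    apply (continuous_comp (competitor _ _ _ _ _ _ _ _)); [apply continuous_competitor, Hok| apply Hk]. }
  split; [|split; [|split]].
  - apply W12_of_FTC_on; [lra| apply (EU (fun r => r)), continuous_id| apply (EU (fun r => r ^ 2)); intros; solve_continuous
                          | apply (ex_RInt_comp_competitor_deriv _ _ _ _ _ Hok _ _ _ (fun r => r)); try lra; apply continuous_id
                          | apply (ex_RInt_comp_competitor_deriv _ _ _ _ _ Hok _ _ _ (fun r => r ^ 2)); try lra; intros; solve_continuous
                          | apply FTC_on_competitor; auto; lra].
  - exists (T (nu_of e) e (-1)), bump_right. repeat split; try lra.
    intros t Ht [Hlt|Hgt]; unfold competitor.
    + rewrite (profile_left _ _ _ _ _ Hok), (proj1 (bump_out _ _ (proj2 (proj1 Hw)) t ltac:(lra))), Hul by lra. ring.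
    + rewrite (profile_right _ _ _ _ _ Hok), (proj1 (bump_out _ _ (proj2 (proj1 Hw)) t ltac:(lra))), Hur by lra. ring.
  - intros t Ht. unfold competitor. eapply Rle_trans; [apply Rabs_triang|].
    pose proof (profile_abs_le_1 W z (nu_of e) e s t Hz). pose proof (bump_bound _ _ (proj2 (proj1 Hw)) t) as Hb.
    rewrite Rabs_mult, (Rabs_right (bump _ _ t)) by lra. fold bump_max in Hb.
    assert (Rabs lam * bump bump_left bump_right t <= Rabs lam * bump_max)
      by (apply Rmult_le_compat_l; [apply Rabs_pos| lra]). lra.
  - exists (RInt (fun t => u t * y t) c d). split; [|apply Lint_RInt, ex_RInt_u_mul; auto; lra].
    rewrite <- (recovery_mass e He). apply Lint_RInt; [lra|]. apply ex_RInt_continuous_le; [lra|]. intros.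
    apply continuous_Rmult; [apply continuous_competitor, Hok| apply Hy; auto].
Qed.

Lemma recovery_L1_rate e : 0 < e < nu_max ^ 4 ->
  exists I, Lint (fun t => Rabs (recovery_U e t - u t)) c d I /\
    I <= nu_of e * (4 + lam_coef * bump_max * (bump_right - bump_left)).
Proof.
  intros He. destruct (layer_inside e He) as ([V1 V2] & V3 & Q1 & Q2 & Q3).
  pose proof bump_window. pose proof (mass_correction_le e He). pose proof lam_coef_pos. pose proof bump_max_pos.
  pose proof nu_max_spec as (_ & N1 & _).
  destruct (competitor_L1_le (nu_of e) e bump_left bump_right (mass_correction e)) as [E1 E2]; try lra.
  eexists. split; [apply Lint_RInt; [lra| exact E1]|]. eapply Rle_trans; [exact E2|]. fold bump_max.
  assert (nu_of e ^ 3 <= nu_of e) by (apply pow_le_base; [lra| lia]).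
  assert (Rabs (mass_correction e) * bump_max * (bump_right - bump_left)
          <= lam_coef * nu_of e * bump_max * (bump_right - bump_left)).
  { apply Rmult_le_compat_r; [lra|]. apply Rmult_le_compat_r; [lra|].
    eapply Rle_trans; [eassumption|]. apply Rmult_le_compat_l; lra. }
  lra.
Qed.

Definition energy_rate_const : R :=
  let Bd := 2 * ((bump_right - bump_left) ^ 2 / 4) * (bump_right - bump_left) in
  4 * y s + L * sigma + 4 * L
  + Ymax * (bump_right - bump_left) * (lam_coef ^ 2 * Bd ^ 2 + K2 * lam_coef ^ 2 * bump_max ^ 2).

Lemma energy_rate_const_ge0 : 0 <= energy_rate_const.
Proof.
  pose proof bump_window. pose proof (Hyp s ltac:(lra)). pose proof (HyM s ltac:(lra)).
  unfold energy_rate_const. cbv zeta.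
  assert (0 <= L * sigma) by (apply Rmult_le_pos; auto).
  assert (0 <= Ymax * (bump_right - bump_left)) by (apply Rmult_le_pos; lra).
  assert (0 <= K2 * lam_coef ^ 2 * bump_max ^ 2) by (apply Rmult_le_pos; [apply Rmult_le_pos; auto|]; apply pow2_ge_0).
  pose proof (pow2_ge_0 lam_coef). pose proof (pow2_ge_0 (2 * ((bump_right - bump_left) ^ 2 / 4) * (bump_right - bump_left))).
  assert (0 <= lam_coef ^ 2 * (2 * ((bump_right - bump_left) ^ 2 / 4) * (bump_right - bump_left)) ^ 2) by nra.
  nra.
Qed.

(* With [e = nu^4] every error term of [competitor_energy_le] is [O(nu)]. *)
Lemma recovery_energy_rate e : 0 < e < nu_max ^ 4 ->
  exists E, Lint (fun t => (e * recovery_G e t ^ 2 + W (recovery_U e t) / e) * y t) c d E /\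
    E <= y s * sigma + nu_of e * energy_rate_const.
Proof.
  intros He. destruct (layer_inside e He) as ([V1 V2] & V3 & Q1 & Q2 & Q3).
  pose proof bump_window. pose proof (mass_correction_le e He).
  pose proof (mass_correction_small e He). pose proof nu_max_spec as (_ & N1 & _ & _ & _ & N5).
  pose proof (Hyp s ltac:(lra)). pose proof (HyM s ltac:(lra)).
  destruct (competitor_energy_le (nu_of e) e bump_left bump_right (mass_correction e)) as [E1 E2];
    try lra; [fold bump_max; lra|].
  eexists. split; [apply Lint_RInt; [lra| exact E1]|]. eapply Rle_trans; [exact E2|].
  set (lam := mass_correction e) in *. set (v := nu_of e) in *. clearbody lam v. subst e.
  replace (v ^ 4 / v) with (v ^ 3) by (field; lra).
  fold bump_max. unfold energy_rate_const. cbv zeta.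
  apply energy_error_le; auto; lra.
Qed.

Lemma recovery_sequence_jump : recovery_sequence C0 W sigma y u c d s.
Proof.
  pose proof nu_max_spec as (N0 & _). pose proof bump_window. pose proof lam_coef_pos as HK. pose proof bump_max_pos as HB.
  exists (nu_max ^ 4). split; [apply pow_lt, N0|].
  exists recovery_U, recovery_G. split; [exact recovery_admissible| split]; intros eta Heta.
  - destruct (nu_of_small eta (4 + lam_coef * bump_max * (bump_right - bump_left))) as [del [Hdel Hsmall]];
      [auto| pose proof (Rmult_lt_0_compat _ _ (Rmult_lt_0_compat _ _ HK HB) (ltac:(lra) : 0 < bump_right - bump_left)); lra|].
    exists del. split; auto. intros e He1 He2.
    destruct (recovery_L1_rate e (conj (proj1 He1) He2)) as [I [HI1 HI2]].
    exists I. split; auto. specialize (Hsmall e He1). lra.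
  - destruct (nu_of_small (eta / 8) energy_rate_const) as [del [Hdel Hsmall]];
      [lra| apply energy_rate_const_ge0|].
    exists del. split; auto. intros e He1 He2.
    destruct (recovery_energy_rate e (conj (proj1 He1) He2)) as [E [HE1 HE2]].
    exists E. split; auto. specialize (Hsmall e He1).
    pose proof PI_4. pose proof PI_RGT_0. pose proof energy_rate_const_ge0.
    assert (0 <= nu_of e * energy_rate_const)
      by (apply Rmult_le_pos; [apply Rlt_le, (nu_of_spec nu_max e N0 (conj (proj1 He1) He2))| auto]).
    nra.
Qed.

End JumpCase.

Lemma sigma_nonneg W sigma : W_ok W -> Lint (fun r => sqrt (W r)) (-1) 1 (sigma / 2) -> 0 <= sigma.
Proof.
  intros HW HL. pose proof (RInt_sqrt_W_oriented W sigma 1 HW HL (or_introl eq_refl)) as E.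
  cut (0 <= sigma / 2); [lra|]. rewrite <- E.
  apply RInt_ge_0; [lra| |intros; apply sqrt_pos].
  apply ex_RInt_continuous_le; [lra|]. intros. apply continuous_sqrt_comp, continuous_W_oriented, HW.
Qed.

Lemma recovery_sequence_at_interface C0 W sigma (y u : R -> R) c d s L :
  1 < C0 -> W_ok W -> Lint (fun r => sqrt (W r)) (-1) 1 (sigma / 2) -> c < d -> c <= s <= d ->
  (forall t, c <= t <= d -> continuous y t) -> (forall t, c <= t <= d -> 0 < y t) ->
  0 <= L -> (forall t, c <= t <= d -> y t <= y s + L * Rabs (t - s)) ->
  (forall t, c < t < d -> u t = 1 \/ u t = -1) ->
  (forall t1 t2, c < t1 < d -> c < t2 < d -> (t1 < s /\ t2 < s \/ s < t1 /\ s < t2) -> u t1 = u t2) ->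
  recovery_sequence C0 W sigma y u c d s.
Proof.
  intros HC0 HW HL Hcd Hs Hy Hyp HL0 Hlip Hu Hside.
  pose proof (sigma_nonneg W sigma HW HL) as Hsig0.
  assert (Hconst : forall m0 z, c < m0 < d -> (forall t, c < t < d -> t <> m0 -> u t = z) ->
      recovery_sequence C0 W sigma y u c d s).
  { intros m0 z Hm Hz. assert (Ez : u ((m0 + d) / 2) = z) by (apply Hz; lra).
    apply (recovery_sequence_const C0 W sigma y u c d s z m0); auto; try (apply Hyp; lra).
    - rewrite <- Ez. apply Hu. lra.
    - apply (W_wells W z HW). rewrite <- Ez. apply Hu. lra. }
  destruct (Req_dec s c) as [Esc|Nsc].
  { apply (Hconst ((c + d) / 2) (u ((c + d) / 2))); [lra|]. intros. apply Hside; lra. }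
  destruct (Req_dec s d) as [Esd|Nsd].
  { apply (Hconst ((c + d) / 2) (u ((c + d) / 2))); [lra|]. intros. apply Hside; lra. }
  set (zL := u ((c + s) / 2)). set (zR := u ((s + d) / 2)).
  assert (UL : forall t, c < t < s -> u t = zL) by (intros; apply Hside; lra).
  assert (UR : forall t, s < t < d -> u t = zR) by (intros; apply Hside; lra).
  destruct (Req_dec zL zR) as [Ez|Nz].
  { apply (Hconst s zR); [lra|]. intros t Ht Hts.
    destruct (Rlt_le_dec t s); [rewrite <- Ez; apply UL| apply UR]; lra. }
  assert (HzL : zL = 1 \/ zL = -1) by (apply Hu; lra).
  assert (HzR : zR = 1 \/ zR = -1) by (apply Hu; lra).
  assert (UL' : forall t, c < t < s -> u t = - zR)
    by (intros t Ht; rewrite UL by auto; destruct HzL, HzR; lra).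
  destruct (continuity_ab_maj y c d) as [mx [Hmx _]];
    [lra| intros; apply continuity_pt_filterlim, Hy; auto|].
  destruct (W_quadratic_near_well W zR HW HzR) as (rho & K2 & Hrho & HK2 & Htay).
  apply (recovery_sequence_jump C0 sigma W y u c d s zR L (y mx) rho K2); auto; try lra.
  - apply RInt_sqrt_W_oriented; auto.
  - intros t Ht. destruct (Hu t Ht) as [-> | ->]; rewrite ?Rabs_R1, ?Rabs_m1; lra.
Qed.

Lemma in_C_y_lipschitz A0 a0 b0 x y sp : in_C A0 a0 b0 x y sp -> exists L, 0 <= L /\
  forall t1 t2, a0 <= t1 <= b0 -> a0 <= t2 <= b0 -> Rabs (y t1 - y t2) <= L * Rabs (t1 - t2).
Proof.
  intros [[L HL] _]. exists (Rmax L 0). split; [apply Rmax_r|]. intros t1 t2 H1 H2.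
  apply Rle_trans with (sqrt ((x t1 - x t2) ^ 2 + (y t1 - y t2) ^ 2)).
  - rewrite <- sqrt_Rsqr_abs. apply sqrt_le_1_alt. unfold Rsqr. pose proof (pow2_ge_0 (x t1 - x t2)). simpl in *. lra.
  - apply Rle_trans with (1 := HL t1 t2 H1 H2). apply Rmult_le_compat_r; [apply Rabs_pos| apply Rmax_l].
Qed.

Lemma continuous_of_lipschitz (y : R -> R) a b L t : 0 <= L ->
  (forall t1 t2, a <= t1 <= b -> a <= t2 <= b -> Rabs (y t1 - y t2) <= L * Rabs (t1 - t2)) ->
  a < t < b -> continuous y t.
Proof.
  intros HL Hy Ht. apply continuity_pt_filterlim, continuity_pt_locally. intros [eps Heps].
  assert (Hd : 0 < Rmin (eps / (L + 1)) (Rmin (t - a) (b - t)))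
    by (repeat apply Rmin_glb_lt; try apply Rdiv_lt_0_compat; lra).
  exists (mkposreal _ Hd). intros t' Ht'. simpl in *.
  unfold ball in Ht'; simpl in Ht'; unfold AbsRing_ball, abs, minus, plus, opp in Ht'; simpl in Ht'.
  pose proof (Rmin_l (eps / (L + 1)) (Rmin (t - a) (b - t))).
  pose proof (Rmin_r (eps / (L + 1)) (Rmin (t - a) (b - t))).
  pose proof (Rmin_l (t - a) (b - t)). pose proof (Rmin_r (t - a) (b - t)).
  apply Rabs_def2 in Ht'.
  apply Rle_lt_trans with (L * Rabs (t' - t)); [apply Hy; lra|].
  apply Rle_lt_trans with (L * (eps / (L + 1))); [apply Rmult_le_compat_l; auto; apply Rabs_le; lra|].
  apply Rmult_lt_reg_r with (L + 1); [lra|]. field_simplify; nra.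
Qed.

Lemma in_P_constant_off_interfaces A0 m a0 b0 (y u : R -> R) c d s t1 t2 :
  in_P A0 m a0 b0 y 1 u -> a0 < c -> d < b0 -> (forall t, c <= t <= d -> 0 < y t) ->
  (forall t, c <= t <= d -> jump_set a0 b0 y u t -> t = s) ->
  c <= t1 -> t1 <= t2 -> t2 <= d -> (t2 < s \/ s < t1) -> u t1 = u t2.
Proof.
  intros (_ & _ & HP & _) Ha Hb Hy Hj H1 H2 H3 H4. apply HP; try lra.
  intros t Ht. split; [apply Hy; lra|]. intro J. apply Hj in J; lra.
Qed.

Theorem mainTheorem8 (A0 m C0 : R) (W : R -> R) (sigma : R)
  (a0 b0 : R) (x y u : R -> R) (c d s : R) :
  0 < A0 -> 1 < C0 -> W_ok W ->
  Lint (fun r => sqrt (W r)) (-1) 1 (sigma / 2) ->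
  a0 < b0 ->
  in_C A0 a0 b0 x y 1 ->
  in_P A0 m a0 b0 y 1 u ->
  (exists L : list R, forall t, jump_set a0 b0 y u t -> In t L) ->
  jump_set a0 b0 y u s ->
  a0 < c -> c < d -> d < b0 -> (forall t, c <= t <= d -> 0 < y t) ->
  c <= s <= d ->
  (forall t, c <= t <= d -> jump_set a0 b0 y u t -> t = s) ->
  exists eps0, 0 < eps0 /\ exists U G : R -> R -> R,
    (forall e, 0 < e < eps0 ->
       W12 c d (U e) (G e) /\
       (exists c' d', c < c' /\ c' <= d' /\ d' < d /\
          forall t, c < t < d -> (t < c' \/ d' < t) -> U e t = u t) /\
       (forall t, c < t < d -> Rabs (U e t) <= C0) /\
       (exists I, Lint (fun t => U e t * y t) c d I /\
                  Lint (fun t => u t * y t) c d I)) /\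
    (forall eta, 0 < eta -> exists del, 0 < del /\ forall e, 0 < e < del -> e < eps0 ->
       exists I, Lint (fun t => Rabs (U e t - u t)) c d I /\ I < eta) /\
    (forall eta, 0 < eta -> exists del, 0 < del /\ forall e, 0 < e < del -> e < eps0 ->
       exists E, Lint (fun t => (e * G e t ^ 2 + W (U e t) / e) * y t) c d E /\
                 2 * PI * E <= 2 * PI * sigma * y s + eta).
Proof.
  intros _ HC0 HW HL _ HC HP _ _ Hac Hcd Hdb Hyp Hs Hj.
  destruct (in_C_y_lipschitz A0 a0 b0 x y 1 HC) as [L [HL0 Hlip]].
  apply (recovery_sequence_at_interface C0 W sigma y u c d s L); auto.
  - intros t Ht. apply (continuous_of_lipschitz y a0 b0 L); auto. lra.
  - intros t Ht. pose proof (Hlip t s ltac:(lra) ltac:(lra)) as H.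
    apply Rabs_le_between in H. lra.
  - intros t Ht. apply HP. lra.
  - intros t1 t2 H1 H2 H3. destruct (Rle_dec t1 t2);
      [| symmetry]; apply (in_P_constant_off_interfaces A0 m a0 b0 y u c d s); auto; lra.
Qed.
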